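(* Let $\Omega\subset\mathbb{R}^2\cong\mathbb{C}$ be a domain and let $\Phi=u+iv$ be an analytic function of $z=x+iy$ in $\Omega$ (with $u,v$ real valued) such that $\Phi_z=\partial_z\Phi$ is bounded and has no zeros in $\Omega$. Let $U$ and $V$ be arbitrary differentiable nonvanishing real valued functions of one real variable, and put $F=U(u)V(v)$, $G=\dfrac{i}{U(u)V(v)}$. For $m=0,\pm1,\pm2,\ldots$ define $$F_m=(\Phi_z)^mF,\quad G_m=(\Phi_z)^mG\qquad\text{for even } m,$$ $$F_m=\frac{(\Phi_z)^m}{U^2(u)}F,\quad G_m=(\Phi_z)^mU^2(u)\,G\qquad\text{for odd } m.$$ Then each $(F_m,G_m)$ is a generating pair in $\Omega$, and for every integer $m$ the pair $(F_{m+1},G_{m+1})$ is a successor of $(F_m,G_m)$. That is, $\{(F_m,G_m)\}_{m\in\mathbb{Z}}$ is a generating sequence in $\Omega$ in which $(F,G)=(F_0,G_0)$ is embedded.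
   Context: Notation: $\partial_{\bar z}=\frac12(\partial_x+i\partial_y)$ and $\partial_z=\frac12(\partial_x-i\partial_y)$; a subscript $\bar z$ or $z$ on a function means application of the corresponding operator. A pair of complex functions $(F,G)$ having partial derivatives in $\Omega$ is a generating pair if $\operatorname{Im}(\overline{F}G)>0$ in $\Omega$. Its characteristic coefficients are $$a_{(F,G)}=-\frac{\overline{F}G_{\bar z}-F_{\bar z}\overline{G}}{F\overline{G}-\overline{F}G},\quad b_{(F,G)}=\frac{FG_{\bar z}-F_{\bar z}G}{F\overline{G}-\overline{F}G},$$ $$A_{(F,G)}=-\frac{\overline{F}G_{z}-F_{z}\overline{G}}{F\overline{G}-\overline{F}G},\quad B_{(F,G)}=\frac{FG_{z}-F_{z}G}{F\overline{G}-\overline{F}G}.$$ A generating pair $(F_1,G_1)$ is called a successor of a generating pair $(F,G)$ if $a_{(F_1,G_1)}=a_{(F,G)}$ and $b_{(F_1,G_1)}=-B_{(F,G)}$. A sequence $\{(F_m,G_m)\}$, $m=0,\pm1,\pm2,\ldots$, of generating pairs is a generating sequence if $(F_{m+1},G_{m+1})$ is a successor of $(F_m,G_m)$ for every $m$. The pair $(F,G)$ is said to be embedded in it if $(F_0,G_0)=(F,G)$. *)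

From Stdlib Require Import Reals ZArith.
From Coquelicot Require Export Coquelicot.
Open Scope R_scope.
Open Scope C_scope.

Definition connected_set (S : Complex.C -> Prop) : Prop :=
  forall A B : Complex.C -> Prop, open A -> open B ->
    (forall z, S z -> A z \/ B z) ->
    (forall z, S z -> A z -> B z -> False) ->
    (exists z, S z /\ A z) -> (exists z, S z /\ B z) -> False.

Definition is_domain (Om : Complex.C -> Prop) : Prop :=
  open Om /\ connected_set Om /\ exists z, Om z.

Definition analytic_on (Phi : Complex.C -> Complex.C) (Om : Complex.C -> Prop) : Prop :=
  forall z, Om z -> @ex_derive C_AbsRing C_NormedModule Phi z.

Definition dx (f : Complex.C -> Complex.C) (z : Complex.C) : Complex.C :=
  (Derive (fun t => Re (f (t, Im z))) (Re z), Derive (fun t => Im (f (t, Im z))) (Re z)).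
Definition dy (f : Complex.C -> Complex.C) (z : Complex.C) : Complex.C :=
  (Derive (fun t => Re (f (Re z, t))) (Im z), Derive (fun t => Im (f (Re z, t))) (Im z)).

Definition has_partials (f : Complex.C -> Complex.C) (Om : Complex.C -> Prop) : Prop :=
  forall z, Om z ->
    ex_derive (fun t => Re (f (t, Im z))) (Re z) /\
    ex_derive (fun t => Im (f (t, Im z))) (Re z) /\
    ex_derive (fun t => Re (f (Re z, t))) (Im z) /\
    ex_derive (fun t => Im (f (Re z, t))) (Im z).

Definition dzbar (f : Complex.C -> Complex.C) (z : Complex.C) : Complex.C :=
  (dx f z + Ci * dy f z) / 2.
Definition dz (f : Complex.C -> Complex.C) (z : Complex.C) : Complex.C :=
  (dx f z - Ci * dy f z) / 2.

Definition generating_pair (F G : Complex.C -> Complex.C) (Om : Complex.C -> Prop) : Prop :=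
  has_partials F Om /\ has_partials G Om /\
  forall z, Om z -> 0 < Im (Cconj (F z) * G z).

Definition char_a (F G : Complex.C -> Complex.C) (z : Complex.C) : Complex.C :=
  - ((Cconj (F z) * dzbar G z - dzbar F z * Cconj (G z)) /
     (F z * Cconj (G z) - Cconj (F z) * G z)).
Definition char_b (F G : Complex.C -> Complex.C) (z : Complex.C) : Complex.C :=
  (F z * dzbar G z - dzbar F z * G z) / (F z * Cconj (G z) - Cconj (F z) * G z).
Definition char_A (F G : Complex.C -> Complex.C) (z : Complex.C) : Complex.C :=
  - ((Cconj (F z) * dz G z - dz F z * Cconj (G z)) /
     (F z * Cconj (G z) - Cconj (F z) * G z)).
Definition char_B (F G : Complex.C -> Complex.C) (z : Complex.C) : Complex.C :=
  (F z * dz G z - dz F z * G z) / (F z * Cconj (G z) - Cconj (F z) * G z).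

Definition successor (F1 G1 F G : Complex.C -> Complex.C) (Om : Complex.C -> Prop) : Prop :=
  generating_pair F1 G1 Om /\
  forall z, Om z -> char_a F1 G1 z = char_a F G z /\ char_b F1 G1 z = - char_B F G z.

Definition generating_sequence (Fs Gs : Z -> Complex.C -> Complex.C) (Om : Complex.C -> Prop) : Prop :=
  (forall m : Z, generating_pair (Fs m) (Gs m) Om) /\
  (forall m : Z, successor (Fs (m + 1)%Z) (Gs (m + 1)%Z) (Fs m) (Gs m) Om).

Definition Czpow (w : Complex.C) (m : Z) : Complex.C :=
  match m with
  | Z0 => 1
  | Zpos p => @pow_n C_Ring w (Pos.to_nat p)
  | Zneg p => / (@pow_n C_Ring w (Pos.to_nat p))
  end.

From Stdlib Require Import Reals ZArith Lra Lia FunctionalExtensionality.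
From Coquelicot Require Import Coquelicot.

(* Every pair of the sequence has the form [F = W g], [G = i W / g] with [W = (Phi_z)^m]
   holomorphic and nonvanishing and [g] real and nonvanishing ([g = U(u) V(v)] for even [m],
   [g = V(v) / U(u)] for odd [m]).  For such a pair [Im (conj F * G) = |W|^2 > 0], [a = 0],
   [b = (W / conj W) g_zbar / g] and [B = (W / conj W) g_z / g].  Since [W_(m+1) = Phi_z W_m] and,
   by Cauchy-Riemann, [u_z = Phi_z / 2] and [v_z = -i Phi_z / 2], the condition [b_(m+1) = -B_m]
   reduces to [Phi_z (log g_(m+1))_zbar = - conj Phi_z (log g_m)_z], both sides being
   [|Phi_z|^2 (-/+ U'/U + i V'/V) / 2].
   The pairs must have partial derivatives, so [Phi_z] itself has to be holomorphic: near a point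
   [Phi_z = I / c] with [I], [c] the Cauchy transforms of [Phi_z] and of [1] over a small square
   (Cauchy's formula, from Goursat's theorem), and Cauchy transforms are holomorphic. *)

Open Scope R_scope.
Open Scope C_scope.

Lemma Cmod_Im_le (c : Complex.C) : (Rabs (Im c) <= Cmod c)%R.
Proof.
  unfold Cmod. rewrite <- sqrt_Rsqr_abs. apply sqrt_le_1_alt.
  unfold Rsqr, Im; simpl; nra.
Qed.

Lemma Cmod_le_Rabs_Re_Im (c : Complex.C) : (Cmod c <= Rabs (Re c) + Rabs (Im c))%R.
Proof.
  pose proof (Rabs_pos (Re c)); pose proof (Rabs_pos (Im c)).
  unfold Cmod. rewrite <- (sqrt_Rsqr (Rabs (Re c) + Rabs (Im c))) by lra.
  apply sqrt_le_1_alt. unfold Rsqr.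
  replace (fst c ^ 2 + snd c ^ 2)%R with (Rabs (Re c) * Rabs (Re c) + Rabs (Im c) * Rabs (Im c))%R.
  - nra.
  - rewrite <- !Rabs_mult. unfold Re, Im. rewrite !Rabs_right; nra.
Qed.

Lemma Cmod_minus_sym (a b : Complex.C) : Cmod (a - b) = Cmod (b - a).
Proof. replace (a - b) with (- (b - a)) by ring. apply Cmod_opp. Qed.

Lemma Cmod_minus_le (a b : Complex.C) : (Cmod (a - b) <= Cmod a + Cmod b)%R.
Proof. eapply Rle_trans; [apply Cmod_triangle | rewrite Cmod_opp; lra]. Qed.

Lemma Cmod_le_minus (a b : Complex.C) : (Cmod a - Cmod (a - b) <= Cmod b)%R.
Proof. pose proof (Cmod_triangle b (a - b)). replace (b + (a - b)) with a in H by ring. lra. Qed.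

Lemma Rabs_Cmod_minus_le (a b : Complex.C) : (Rabs (Cmod a - Cmod b) <= Cmod (a - b))%R.
Proof.
  apply Rabs_le. pose proof (Cmod_le_minus b a). pose proof (Cmod_le_minus a b).
  rewrite Cmod_minus_sym in H. lra.
Qed.

Lemma Rabs_Re_minus_le (a b : Complex.C) : (Rabs (Re a - Re b) <= Cmod (a - b))%R.
Proof. replace (Re a - Re b)%R with (Re (a - b)) by (unfold Re; simpl; ring). apply re_le_Cmod. Qed.

Lemma Rabs_Im_minus_le (a b : Complex.C) : (Rabs (Im a - Im b) <= Cmod (a - b))%R.
Proof. replace (Im a - Im b)%R with (Im (a - b)) by (unfold Im; simpl; ring). apply Cmod_Im_le. Qed.

Lemma Cminus_neq_0 (w z : Complex.C) : w <> z -> w - z <> 0.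
Proof. intros H E. apply H. replace w with (w - z + z) by ring. rewrite E. ring. Qed.

Lemma Cpow_neq_0 (x : Complex.C) k : x <> 0 -> x ^ k <> 0.
Proof.
  intros H; induction k; simpl; [|apply Cmult_neq_0; auto].
  intros E. apply (f_equal fst) in E. simpl in E. lra.
Qed.

Lemma Cinv_neq_0 (x : Complex.C) : x <> 0 -> / x <> 0.
Proof.
  intros H E. pose proof (Cinv_r x H) as H2. rewrite E, Cmult_0_r in H2.
  apply (f_equal fst) in H2. simpl in H2. lra.
Qed.

Lemma Cconj_neq_0 (x : Complex.C) : x <> 0 -> Cconj x <> 0.
Proof. intros H E. apply H. rewrite <- (Cconj_conj x), E. apply injective_projections; simpl; ring. Qed.

Lemma RtoC_neq_0 (r : R) : r <> 0%R -> RtoC r <> 0.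
Proof. intros H E. apply H. apply (f_equal fst) in E. exact E. Qed.

(* Coquelicot's generic rules (product, chain rule) are stated for [AbsRing_NormedModule]. *)
Definition is_Cderive (f : Complex.C -> Complex.C) (z l : Complex.C) : Prop :=
  @is_derive C_AbsRing (AbsRing_NormedModule C_AbsRing) f z l.

Lemma is_Cderive_approx f z l : is_Cderive f z l ->
  forall eps : R, 0 < eps -> exists del : R, 0 < del /\
    forall y, Cmod (y - z) < del -> Cmod (f y - f z - (y - z) * l) <= eps * Cmod (y - z).
Proof.
  intros [_ H] eps Heps.
  destruct (H z (fun P HP => HP) (mkposreal eps Heps)) as [d Hd].
  exists d. split; [apply cond_pos | exact Hd].
Qed.

Lemma is_Cderive_of_approx f z l :
  (forall eps : R, 0 < eps -> exists del : R, 0 < del /\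
    forall y, Cmod (y - z) < del -> Cmod (f y - f z - (y - z) * l) <= eps * Cmod (y - z)) ->
  is_Cderive f z l.
Proof.
  intros H. split; [apply is_linear_scal_l|].
  intros x Hx. apply (@is_filter_lim_locally_unique C_AbsRing (AbsRing_NormedModule C_AbsRing)) in Hx.
  subst x. intros eps. destruct (H eps (cond_pos eps)) as [d [Hd Hd2]].
  exists (mkposreal _ Hd). exact Hd2.
Qed.

(* [analytic_on] uses [C_NormedModule]; both norms are [Cmod]. *)
Lemma is_Cderive_of_C_NormedModule f z l :
  @is_derive C_AbsRing C_NormedModule f z l -> is_Cderive f z l.
Proof.
  intros [_ H]. apply is_Cderive_of_approx. intros eps Heps.
  destruct (H z (fun P HP => HP) (mkposreal eps Heps)) as [d Hd].
  exists d. split; [apply cond_pos | exact Hd].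
Qed.

Lemma is_Cderive_const c z : is_Cderive (fun _ => c) z 0.
Proof. exact (@is_derive_const C_AbsRing (AbsRing_NormedModule C_AbsRing) c z). Qed.

Lemma is_Cderive_id z : is_Cderive (fun y => y) z 1.
Proof. exact (@is_derive_id C_AbsRing z). Qed.

Lemma is_Cderive_plus f g z a b :
  is_Cderive f z a -> is_Cderive g z b -> is_Cderive (fun y => f y + g y) z (a + b).
Proof. exact (@is_derive_plus C_AbsRing (AbsRing_NormedModule C_AbsRing) f g z a b). Qed.

Lemma is_Cderive_opp f z a : is_Cderive f z a -> is_Cderive (fun y => - f y) z (- a).
Proof. exact (@is_derive_opp C_AbsRing (AbsRing_NormedModule C_AbsRing) f z a). Qed.

Lemma is_Cderive_minus f g z a b :
  is_Cderive f z a -> is_Cderive g z b -> is_Cderive (fun y => f y - g y) z (a - b).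
Proof. exact (@is_derive_minus C_AbsRing (AbsRing_NormedModule C_AbsRing) f g z a b). Qed.

Lemma is_Cderive_mult f g z a b : is_Cderive f z a -> is_Cderive g z b ->
  is_Cderive (fun y => f y * g y) z (a * g z + f z * b).
Proof. intros H1 H2; exact (is_derive_mult f g z a b H1 H2 Cmult_comm). Qed.

Lemma is_Cderive_comp f g z a b :
  is_Cderive g z a -> is_Cderive f (g z) b -> is_Cderive (fun y => f (g y)) z (a * b).
Proof. intros H1 H2; exact (@is_derive_comp C_AbsRing (AbsRing_NormedModule C_AbsRing) f g z b a H2 H1). Qed.

Lemma is_Cderive_ext f g z l : (forall y, f y = g y) -> is_Cderive f z l -> is_Cderive g z l.
Proof. exact (@is_derive_ext C_AbsRing (AbsRing_NormedModule C_AbsRing) f g z l). Qed.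

Lemma is_Cderive_ext_loc f g z l d : 0 < d ->
  (forall y, Cmod (y - z) < d -> f y = g y) -> is_Cderive f z l -> is_Cderive g z l.
Proof.
  intros Hd H1. apply (@is_derive_ext_loc C_AbsRing (AbsRing_NormedModule C_AbsRing)).
  exists (mkposreal d Hd). exact H1.
Qed.

Lemma is_Cderive_eq f z l l' : l = l' -> is_Cderive f z l -> is_Cderive f z l'.
Proof. now intros ->. Qed.

Lemma is_Cderive_affine (al be z : Complex.C) : is_Cderive (fun y => al + be * y) z be.
Proof.
  eapply is_Cderive_eq;
    [|apply is_Cderive_plus; [apply is_Cderive_const | apply is_Cderive_mult; [apply is_Cderive_const | apply is_Cderive_id]]].
  cbv beta. ring.
Qed.

Lemma is_Cderive_continuous f z l : is_Cderive f z l ->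
  forall eps, 0 < eps -> exists del, 0 < del /\ forall y, Cmod (y - z) < del -> Cmod (f y - f z) < eps.
Proof.
  intros H eps Heps. destruct (is_Cderive_approx _ _ _ H 1%R ltac:(lra)) as [d [Hd H1]].
  pose proof (Cmod_ge_0 l).
  exists (Rmin d (eps / (Cmod l + 1))). split.
  { apply Rmin_pos; auto. apply Rdiv_lt_0_compat; lra. }
  intros y Hy. specialize (H1 y ltac:(eapply Rlt_le_trans; [exact Hy | apply Rmin_l])).
  assert (Hy2 : Cmod (y - z) < eps / (Cmod l + 1)) by (eapply Rlt_le_trans; [exact Hy | apply Rmin_r]).
  replace (f y - f z) with ((f y - f z - (y - z) * l) + (y - z) * l) by ring.
  eapply Rle_lt_trans; [apply Cmod_triangle|]. rewrite Cmod_mult.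
  pose proof (Cmod_ge_0 (y - z)).
  apply (Rmult_lt_compat_r (Cmod l + 1)) in Hy2; [|lra].
  replace (eps / (Cmod l + 1) * (Cmod l + 1))%R with eps in Hy2 by (field; lra).
  nra.
Qed.

Lemma is_Cderive_unique f z l1 l2 : is_Cderive f z l1 -> is_Cderive f z l2 -> l1 = l2.
Proof.
  intros H1 H2. destruct (Ceq_dec l1 l2) as [|Hne]; auto. exfalso.
  assert (Hp : 0 < Cmod (l1 - l2)) by exact (proj1 (Cmod_gt_0 _) (Cminus_neq_0 _ _ Hne)).
  set (e := (Cmod (l1 - l2) / 4)%R).
  destruct (is_Cderive_approx _ _ _ H1 e ltac:(unfold e; lra)) as [d1 [Hd1 K1]].
  destruct (is_Cderive_approx _ _ _ H2 e ltac:(unfold e; lra)) as [d2 [Hd2 K2]].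
  set (d := (Rmin d1 d2 / 2)%R).
  assert (Hd : 0 < d) by (unfold d; apply Rdiv_lt_0_compat; [apply Rmin_pos|]; lra).
  set (y := z + RtoC d).
  assert (Hyz : Cmod (y - z) = d).
  { unfold y. replace (z + RtoC d - z) with (RtoC d) by ring. rewrite Cmod_R. apply Rabs_right; lra. }
  assert (Hm : Cmod (y - z) < d1 /\ Cmod (y - z) < d2).
  { rewrite Hyz. unfold d. pose proof (Rmin_l d1 d2). pose proof (Rmin_r d1 d2). lra. }
  specialize (K1 y (proj1 Hm)). specialize (K2 y (proj2 Hm)).
  assert (Cmod ((y - z) * (l1 - l2)) <= 2 * e * Cmod (y - z)).
  { replace ((y - z) * (l1 - l2)) with
      ((f y - f z - (y - z) * l2) + - (f y - f z - (y - z) * l1)) by ring.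
    eapply Rle_trans; [apply Cmod_triangle|]. rewrite Cmod_opp. lra. }
  rewrite Cmod_mult, Hyz in H. unfold e in H. nra.
Qed.

Lemma is_Cderive_Cinv (w : Complex.C) : w <> 0 -> is_Cderive Cinv w (- / (w * w)).
Proof.
  intros Hw. apply is_Cderive_of_approx. intros eps Heps.
  assert (Hm : 0 < Cmod w) by exact (proj1 (Cmod_gt_0 w) Hw).
  exists (Rmin (Cmod w / 2) (eps * (Cmod w * Cmod w * Cmod w) / 2)). split.
  { apply Rmin_pos; [lra|]. apply Rdiv_lt_0_compat; [|lra]. repeat apply Rmult_lt_0_compat; auto. }
  intros y Hy.
  assert (Hy1 : Cmod (y - w) < Cmod w / 2) by (eapply Rlt_le_trans; [exact Hy | apply Rmin_l]).
  assert (Hy2 : Cmod (y - w) < eps * (Cmod w * Cmod w * Cmod w) / 2)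
    by (eapply Rlt_le_trans; [exact Hy | apply Rmin_r]).
  assert (Hyn : Cmod w / 2 <= Cmod y) by (pose proof (Cmod_le_minus w y); rewrite Cmod_minus_sym in Hy1; lra).
  assert (Hy0 : y <> 0) by (intros ->; rewrite Cmod_0 in Hyn; lra).
  replace (/ y - / w - (y - w) * - / (w * w)) with ((y - w) * (y - w) / (y * (w * w))) by (field; auto).
  rewrite Cmod_div by (repeat apply Cmult_neq_0; auto).
  rewrite !Cmod_mult.
  pose proof (Cmod_ge_0 (y - w)).
  apply Rle_div_l; [apply Rmult_lt_0_compat; [lra | nra]|].
  assert (eps * Cmod (y - w) * (Cmod w / 2 * (Cmod w * Cmod w))
          <= eps * Cmod (y - w) * (Cmod y * (Cmod w * Cmod w))).
  { apply Rmult_le_compat_l; [nra|]. apply Rmult_le_compat_r; [nra | auto]. }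
  nra.
Qed.

Lemma is_Cderive_inv f z a : is_Cderive f z a -> f z <> 0 ->
  is_Cderive (fun y => / f y) z (- a / (f z * f z)).
Proof.
  intros H Hz. eapply is_Cderive_eq; [|apply (is_Cderive_comp Cinv f z a _ H (is_Cderive_Cinv _ Hz))].
  field. auto.
Qed.

Lemma ex_Cderive_pow (w : Complex.C -> Complex.C) z k n :
  is_Cderive w z k -> exists l, is_Cderive (fun q => w q ^ n) z l.
Proof.
  intros Hw. induction n as [|n [l IH]].
  - exists 0. apply (is_Cderive_ext (fun _ => 1)); [reflexivity | apply is_Cderive_const].
  - eexists. apply (is_Cderive_mult w (fun q => w q ^ n)); eauto.
Qed.

Lemma pow_n_Cpow (x : Complex.C) n : @pow_n C_Ring x n = x ^ n.
Proof. induction n as [|n IH]; [reflexivity | simpl; rewrite IH; reflexivity]. Qed.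

Lemma Czpow_of_nat x n : Czpow x (Z.of_nat n) = x ^ n.
Proof.
  destruct n; [reflexivity|]. simpl. rewrite SuccNat2Pos.id_succ. apply pow_n_Cpow.
Qed.

Lemma Czpow_opp_nat x n : Czpow x (- Z.of_nat n)%Z = / x ^ n.
Proof.
  destruct n; simpl.
  - apply injective_projections; simpl; field.
  - rewrite SuccNat2Pos.id_succ, pow_n_Cpow. reflexivity.
Qed.

Lemma Z_nat_or_opp_nat (m : Z) : (exists n, m = Z.of_nat n) \/ (exists n, m = (- Z.of_nat (S n))%Z).
Proof.
  destruct (Z_le_gt_dec 0 m).
  - left. exists (Z.to_nat m). rewrite Z2Nat.id; auto.
  - right. exists (Z.to_nat (- m - 1)). rewrite Nat2Z.inj_succ, Z2Nat.id; lia.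
Qed.

Lemma Czpow_neq_0 (x : Complex.C) m : x <> 0 -> Czpow x m <> 0.
Proof.
  intros H. destruct (Z_nat_or_opp_nat m) as [[n ->]|[n ->]].
  - rewrite Czpow_of_nat. apply Cpow_neq_0; auto.
  - rewrite Czpow_opp_nat. apply Cinv_neq_0, Cpow_neq_0; auto.
Qed.

Lemma Czpow_succ (x : Complex.C) m : x <> 0 -> Czpow x (m + 1) = x * Czpow x m.
Proof.
  intros H. destruct (Z_nat_or_opp_nat m) as [[n ->]|[n ->]].
  - replace (Z.of_nat n + 1)%Z with (Z.of_nat (S n)) by lia. rewrite !Czpow_of_nat. reflexivity.
  - replace (- Z.of_nat (S n) + 1)%Z with (- Z.of_nat n)%Z by lia. rewrite !Czpow_opp_nat.
    pose proof (Cpow_neq_0 x n H). simpl. field. auto.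
Qed.

Lemma ex_Cderive_Czpow (w : Complex.C -> Complex.C) z k m :
  is_Cderive w z k -> w z <> 0 -> exists l, is_Cderive (fun q => Czpow (w q) m) z l.
Proof.
  intros Hw Hz. destruct (Z_nat_or_opp_nat m) as [[n ->]|[n ->]].
  - destruct (ex_Cderive_pow w z k n Hw) as [l Hl]. exists l.
    eapply is_Cderive_ext; [|exact Hl]. intros; rewrite Czpow_of_nat; auto.
  - destruct (ex_Cderive_pow w z k (S n) Hw) as [l Hl]. eexists.
    eapply is_Cderive_ext; [|apply is_Cderive_inv; [exact Hl | apply Cpow_neq_0; auto]].
    intros; rewrite Czpow_opp_nat; auto.
Qed.

Definition CInt (f : R -> Complex.C) (a b : R) : Complex.C :=
  (RInt (fun t => Re (f t)) a b, RInt (fun t => Im (f t)) a b).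

Definition ex_CInt (f : R -> Complex.C) (a b : R) : Prop :=
  ex_RInt (fun t => Re (f t)) a b /\ ex_RInt (fun t => Im (f t)) a b.

Lemma CInt_Chasles f a b c : ex_CInt f a b -> ex_CInt f b c -> CInt f a b + CInt f b c = CInt f a c.
Proof.
  intros [H1 H2] [H3 H4].
  apply injective_projections; apply (RInt_Chasles (V := R_CompleteNormedModule)); auto.
Qed.

Lemma CInt_plus f g a b : ex_CInt f a b -> ex_CInt g a b ->
  CInt (fun t => f t + g t) a b = CInt f a b + CInt g a b.
Proof.
  intros [H1 H2] [H3 H4].
  apply injective_projections; apply (RInt_plus (V := R_CompleteNormedModule)); auto.
Qed.

Lemma CInt_minus f g a b : ex_CInt f a b -> ex_CInt g a b ->
  CInt (fun t => f t - g t) a b = CInt f a b - CInt g a b.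
Proof.
  intros [H1 H2] [H3 H4].
  apply injective_projections; apply (RInt_minus (V := R_CompleteNormedModule)); auto.
Qed.

Lemma CInt_scal (c : Complex.C) f a b : ex_CInt f a b -> CInt (fun t => c * f t) a b = c * CInt f a b.
Proof.
  intros [H1 H2].
  assert (S : forall k h, ex_RInt h a b -> RInt (fun t => k * h t)%R a b = (k * RInt h a b)%R)
    by (intros k h Hh; exact (RInt_scal h a b k Hh)).
  assert (E : forall k1 k2 h1 h2, ex_RInt h1 a b -> ex_RInt h2 a b ->
      RInt (fun t => k1 * h1 t + k2 * h2 t)%R a b = (k1 * RInt h1 a b + k2 * RInt h2 a b)%R).
  { intros k1 k2 h1 h2 E1 E2. rewrite <- !S by auto.
    exact (RInt_plus _ _ a b (ex_RInt_scal _ _ _ k1 E1) (ex_RInt_scal _ _ _ k2 E2)). }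
  unfold CInt. apply injective_projections; simpl.
  - replace (fst c * RInt (fun t => Re (f t)) a b - snd c * RInt (fun t => Im (f t)) a b)%R
      with (fst c * RInt (fun t => Re (f t)) a b + - snd c * RInt (fun t => Im (f t)) a b)%R by ring.
    rewrite <- E by auto. apply RInt_ext. intros; unfold Re, Im; simpl; ring.
  - rewrite <- E by auto. apply RInt_ext. intros; unfold Re, Im; simpl; ring.
Qed.

Lemma CInt_ext f g a b : (forall t, Rmin a b <= t <= Rmax a b -> f t = g t) -> CInt f a b = CInt g a b.
Proof. intros H. unfold CInt. f_equal; apply RInt_ext; intros x Hx; rewrite H; auto; lra. Qed.

Lemma CInt_norm_le f a b M : a <= b -> ex_CInt f a b ->
  (forall t, a <= t <= b -> Cmod (f t) <= M) -> Cmod (CInt f a b) <= 2 * (b - a) * M.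
Proof.
  intros Hab [H1 H2] HM. eapply Rle_trans; [apply (Cmod_le_Rabs_Re_Im (CInt f a b))|].
  assert (Rabs (RInt (fun t => Re (f t)) a b) <= (b - a) * M).
  { apply abs_RInt_le_const; auto. intros t Ht. eapply Rle_trans; [apply re_le_Cmod | auto]. }
  assert (Rabs (RInt (fun t => Im (f t)) a b) <= (b - a) * M).
  { apply abs_RInt_le_const; auto. intros t Ht. eapply Rle_trans; [apply Cmod_Im_le | auto]. }
  change (Re (CInt f a b)) with (RInt (fun t => Re (f t)) a b).
  change (Im (CInt f a b)) with (RInt (fun t => Im (f t)) a b). lra.
Qed.

Lemma RInt_affine (c0 c1 a b : R) :
  RInt (fun t => c0 + c1 * t)%R a b = (c0 * (b - a) + c1 * (b * b - a * a) / 2)%R.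
Proof.
  apply is_RInt_unique.
  set (F := fun t => (c0 * t + c1 * (t * t) / 2)%R).
  replace (c0 * (b - a) + c1 * (b * b - a * a) / 2)%R with (minus (F b) (F a))
    by (unfold F, minus, plus, opp; simpl; field).
  apply (is_RInt_derive (V := R_CompleteNormedModule)); intros x _; unfold F.
  - auto_derive; auto. field.
  - apply continuity_pt_filterlim, derivable_continuous_pt.
    apply derivable_pt_plus; [apply derivable_pt_const|].
    apply derivable_pt_mult; [apply derivable_pt_const | apply derivable_pt_id].
Qed.

Lemma CInt_affine (u v : Complex.C) a b :
  CInt (fun t => u + v * RtoC t) a b = u * RtoC (b - a) + v * RtoC ((b * b - a * a) / 2).
Proof.
  unfold CInt. apply injective_projections; cbn [fst snd].
  - rewrite (RInt_ext _ (fun t => Re u + Re v * t)%R) by (intros; unfold Re, Im; simpl; ring).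
    rewrite RInt_affine. unfold Re, Im; simpl; field.
  - rewrite (RInt_ext _ (fun t => Im u + Im v * t)%R) by (intros; unfold Re, Im; simpl; ring).
    rewrite RInt_affine. unfold Re, Im; simpl; field.
Qed.

Lemma continuous_of_eps_delta (h : R -> R) x :
  (forall eps, 0 < eps -> exists del, 0 < del /\ forall t, Rabs (t - x) < del -> Rabs (h t - h x) < eps) ->
  continuous h x.
Proof.
  intros H. apply continuity_pt_filterlim. intros eps Heps.
  destruct (H eps Heps) as [d [Hd H2]]. exists d. split; auto.
  intros t [_ Ht]. apply H2. exact Ht.
Qed.

Definition unit_speed (p : R -> Complex.C) : Prop := forall t s, Cmod (p t - p s) = Rabs (t - s).

Lemma unit_speed_horizontal y : unit_speed (fun t => (t, y)).
Proof.
  intros t s. replace ((t, y) - (s, y)) with (RtoC (t - s)) by (apply injective_projections; simpl; ring).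
  apply Cmod_R.
Qed.

Lemma unit_speed_vertical x : unit_speed (fun t => (x, t)).
Proof.
  intros t s. replace ((x, t) - (x, s)) with (Ci * RtoC (t - s)) by (apply injective_projections; simpl; ring).
  rewrite Cmod_mult, Cmod_Ci, Cmod_R. ring.
Qed.

Lemma continuous_Cderive_along (phi : Complex.C -> R) g (p : R -> Complex.C) x l :
  (forall a b, Rabs (phi a - phi b) <= Cmod (a - b)) -> unit_speed p ->
  is_Cderive g (p x) l -> continuous (fun t => phi (g (p t))) x.
Proof.
  intros Hphi Hp H. apply continuous_of_eps_delta. intros eps Heps.
  destruct (is_Cderive_continuous _ _ _ H eps Heps) as [d [Hd Hd2]].
  exists d. split; auto. intros t Ht.
  eapply Rle_lt_trans; [apply Hphi|]. apply Hd2. rewrite Hp. auto.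
Qed.

Lemma ex_CInt_Cderive_along g (p : R -> Complex.C) a b : unit_speed p ->
  (forall t, Rmin a b <= t <= Rmax a b -> exists l, is_Cderive g (p t) l) -> ex_CInt (fun t => g (p t)) a b.
Proof.
  intros Hp H. split; apply (@ex_RInt_continuous R_CompleteNormedModule); intros t Ht;
    destruct (H t Ht) as [l Hl].
  - exact (continuous_Cderive_along Re g p t l Rabs_Re_minus_le Hp Hl).
  - exact (continuous_Cderive_along Im g p t l Rabs_Im_minus_le Hp Hl).
Qed.

Lemma bounded_Cderive_along g (p : R -> Complex.C) a b : a <= b -> unit_speed p ->
  (forall t, a <= t <= b -> exists l, is_Cderive g (p t) l) ->
  exists M, forall t, a <= t <= b -> Cmod (g (p t)) <= M.
Proof.
  intros Hab Hp H.
  destruct (continuity_ab_maj (fun t => Cmod (g (p t))) a b Hab) as [tM [HM _]].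
  - intros c Hc. apply continuity_pt_filterlim. destruct (H c Hc) as [l Hl].
    exact (continuous_Cderive_along Cmod g p c l Rabs_Cmod_minus_le Hp Hl).
  - exists (Cmod (g (p tM))). auto.
Qed.

(* The positively oriented boundary of [a1, b1] x [a2, b2]; on vertical sides [dz = i dt]. *)
Definition rect_contour (g : Complex.C -> Complex.C) (a1 b1 a2 b2 : R) : Complex.C :=
  CInt (fun t => g (t, a2)) a1 b1 + Ci * CInt (fun t => g (b1, t)) a2 b2
  - CInt (fun t => g (t, b2)) a1 b1 - Ci * CInt (fun t => g (a1, t)) a2 b2.

Definition on_rect_boundary (a1 b1 a2 b2 : R) (z : Complex.C) : Prop :=
  (a1 <= Re z <= b1 /\ (Im z = a2 \/ Im z = b2)) \/ (a2 <= Im z <= b2 /\ (Re z = a1 \/ Re z = b1)).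

Definition Cderivable_on_boundary g a1 b1 a2 b2 : Prop :=
  forall z, on_rect_boundary a1 b1 a2 b2 z -> exists l, is_Cderive g z l.

Definition Cderivable_on_rect g a1 b1 a2 b2 : Prop :=
  forall z, a1 <= Re z <= b1 -> a2 <= Im z <= b2 -> exists l, is_Cderive g z l.

Local Ltac solve_on_boundary := unfold on_rect_boundary; simpl;
  first [ left; split; [lra | left; reflexivity] | left; split; [lra | right; reflexivity]
        | right; split; [lra | left; reflexivity] | right; split; [lra | right; reflexivity] ].

Lemma on_rect_boundary_in a1 b1 a2 b2 z : a1 <= b1 -> a2 <= b2 ->
  on_rect_boundary a1 b1 a2 b2 z -> a1 <= Re z <= b1 /\ a2 <= Im z <= b2.
Proof. intros H1 H2 [[H3 [H4|H4]]|[H3 [H4|H4]]]; rewrite H4; lra. Qed.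

Lemma Cderivable_on_rect_boundary g a1 b1 a2 b2 : a1 <= b1 -> a2 <= b2 ->
  Cderivable_on_rect g a1 b1 a2 b2 -> Cderivable_on_boundary g a1 b1 a2 b2.
Proof. intros H1 H2 H z Hz. destruct (on_rect_boundary_in _ _ _ _ _ H1 H2 Hz). apply H; auto. Qed.

Lemma ex_CInt_horizontal g a b y : a <= b ->
  (forall t, a <= t <= b -> exists l, is_Cderive g (t, y) l) -> ex_CInt (fun t => g (t, y)) a b.
Proof.
  intros Hab H. apply (ex_CInt_Cderive_along g (fun t => (t, y))); [apply unit_speed_horizontal|].
  rewrite Rmin_left, Rmax_right by auto. exact H.
Qed.

Lemma ex_CInt_vertical g a b x : a <= b ->
  (forall t, a <= t <= b -> exists l, is_Cderive g (x, t) l) -> ex_CInt (fun t => g (x, t)) a b.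
Proof.
  intros Hab H. apply (ex_CInt_Cderive_along g (fun t => (x, t))); [apply unit_speed_vertical|].
  rewrite Rmin_left, Rmax_right by auto. exact H.
Qed.

Lemma ex_CInt_rect_sides g a1 b1 a2 b2 : a1 <= b1 -> a2 <= b2 -> Cderivable_on_boundary g a1 b1 a2 b2 ->
  ex_CInt (fun t => g (t, a2)) a1 b1 /\ ex_CInt (fun t => g (b1, t)) a2 b2 /\
  ex_CInt (fun t => g (t, b2)) a1 b1 /\ ex_CInt (fun t => g (a1, t)) a2 b2.
Proof.
  intros H1 H2 H.
  split; [|split; [|split]];
    [apply ex_CInt_horizontal | apply ex_CInt_vertical | apply ex_CInt_horizontal | apply ex_CInt_vertical];
    auto; intros t Ht; apply H; solve_on_boundary.
Qed.

Lemma rect_contour_minus f g a1 b1 a2 b2 : a1 <= b1 -> a2 <= b2 ->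
  Cderivable_on_boundary f a1 b1 a2 b2 -> Cderivable_on_boundary g a1 b1 a2 b2 ->
  rect_contour (fun z => f z - g z) a1 b1 a2 b2 = rect_contour f a1 b1 a2 b2 - rect_contour g a1 b1 a2 b2.
Proof.
  intros H1 H2 Hf Hg. destruct (ex_CInt_rect_sides f _ _ _ _ H1 H2 Hf) as (F1 & F2 & F3 & F4).
  destruct (ex_CInt_rect_sides g _ _ _ _ H1 H2 Hg) as (G1 & G2 & G3 & G4).
  unfold rect_contour. rewrite !CInt_minus by auto. ring.
Qed.

Lemma rect_contour_scal c f a1 b1 a2 b2 : a1 <= b1 -> a2 <= b2 -> Cderivable_on_boundary f a1 b1 a2 b2 ->
  rect_contour (fun z => c * f z) a1 b1 a2 b2 = c * rect_contour f a1 b1 a2 b2.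
Proof.
  intros H1 H2 Hf. destruct (ex_CInt_rect_sides f _ _ _ _ H1 H2 Hf) as (F1 & F2 & F3 & F4).
  unfold rect_contour. rewrite !(CInt_scal c) by auto. ring.
Qed.

Lemma rect_contour_ext f g a1 b1 a2 b2 : a1 <= b1 -> a2 <= b2 ->
  (forall z, on_rect_boundary a1 b1 a2 b2 z -> f z = g z) ->
  rect_contour f a1 b1 a2 b2 = rect_contour g a1 b1 a2 b2.
Proof.
  intros H1 H2 H. unfold rect_contour.
  assert (Eh : forall y, (y = a2 \/ y = b2) -> CInt (fun t => f (t, y)) a1 b1 = CInt (fun t => g (t, y)) a1 b1).
  { intros y Hy. apply CInt_ext. rewrite Rmin_left, Rmax_right by auto.
    intros t Ht. apply H. left. simpl. auto. }
  assert (Ev : forall x, (x = a1 \/ x = b1) -> CInt (fun t => f (x, t)) a2 b2 = CInt (fun t => g (x, t)) a2 b2).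
  { intros x Hx. apply CInt_ext. rewrite Rmin_left, Rmax_right by auto.
    intros t Ht. apply H. right. simpl. auto. }
  rewrite (Eh a2), (Eh b2), (Ev a1), (Ev b1); auto.
Qed.

Lemma rect_contour_norm_le f a1 b1 a2 b2 M : a1 <= b1 -> a2 <= b2 -> Cderivable_on_boundary f a1 b1 a2 b2 ->
  (forall z, on_rect_boundary a1 b1 a2 b2 z -> Cmod (f z) <= M) ->
  Cmod (rect_contour f a1 b1 a2 b2) <= 4 * (b1 - a1 + (b2 - a2)) * M.
Proof.
  intros H1 H2 Hf HM. destruct (ex_CInt_rect_sides f _ _ _ _ H1 H2 Hf) as (F1 & F2 & F3 & F4).
  assert (B1 : Cmod (CInt (fun t => f (t, a2)) a1 b1) <= 2 * (b1 - a1) * M)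
    by (apply CInt_norm_le; auto; intros; apply HM; solve_on_boundary).
  assert (B2 : Cmod (CInt (fun t => f (b1, t)) a2 b2) <= 2 * (b2 - a2) * M)
    by (apply CInt_norm_le; auto; intros; apply HM; solve_on_boundary).
  assert (B3 : Cmod (CInt (fun t => f (t, b2)) a1 b1) <= 2 * (b1 - a1) * M)
    by (apply CInt_norm_le; auto; intros; apply HM; solve_on_boundary).
  assert (B4 : Cmod (CInt (fun t => f (a1, t)) a2 b2) <= 2 * (b2 - a2) * M)
    by (apply CInt_norm_le; auto; intros; apply HM; solve_on_boundary).
  unfold rect_contour. revert B1 B2 B3 B4.
  generalize (CInt (fun t => f (t, a2)) a1 b1) (CInt (fun t => f (b1, t)) a2 b2)
    (CInt (fun t => f (t, b2)) a1 b1) (CInt (fun t => f (a1, t)) a2 b2).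
  intros A B C D HA HB HC HD.
  replace (A + Ci * B - C - Ci * D) with (A + (Ci * B + (- C + - (Ci * D)))) by ring.
  pose proof (Cmod_triangle A (Ci * B + (- C + - (Ci * D)))).
  pose proof (Cmod_triangle (Ci * B) (- C + - (Ci * D))).
  pose proof (Cmod_triangle (- C) (- (Ci * D))).
  rewrite !Cmod_opp, !Cmod_mult, !Cmod_Ci, !Rmult_1_l in *. lra.
Qed.

Lemma rect_contour_affine (al be : Complex.C) a1 b1 a2 b2 :
  rect_contour (fun z => al + be * z) a1 b1 a2 b2 = 0.
Proof.
  unfold rect_contour.
  rewrite (CInt_ext _ (fun t => (al + be * Ci * RtoC a2) + be * RtoC t)),
    (CInt_ext (fun t => al + be * (b1, t)) (fun t => (al + be * RtoC b1) + be * Ci * RtoC t)),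
    (CInt_ext (fun t => al + be * (t, b2)) (fun t => (al + be * Ci * RtoC b2) + be * RtoC t)),
    (CInt_ext (fun t => al + be * (a1, t)) (fun t => (al + be * RtoC a1) + be * Ci * RtoC t)),
    !CInt_affine.
  - apply injective_projections; simpl; field.
  all: intros; apply injective_projections; simpl; ring.
Qed.

Lemma rect_contour_split_x g a1 c b1 a2 b2 :
  ex_CInt (fun t => g (t, a2)) a1 c -> ex_CInt (fun t => g (t, a2)) c b1 ->
  ex_CInt (fun t => g (t, b2)) a1 c -> ex_CInt (fun t => g (t, b2)) c b1 ->
  rect_contour g a1 b1 a2 b2 = rect_contour g a1 c a2 b2 + rect_contour g c b1 a2 b2.
Proof.
  intros H1 H2 H3 H4. unfold rect_contour.
  rewrite <- (CInt_Chasles _ a1 c b1 H1 H2), <- (CInt_Chasles _ a1 c b1 H3 H4). ring.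
Qed.

Lemma rect_contour_split_y g a1 b1 a2 c b2 :
  ex_CInt (fun t => g (a1, t)) a2 c -> ex_CInt (fun t => g (a1, t)) c b2 ->
  ex_CInt (fun t => g (b1, t)) a2 c -> ex_CInt (fun t => g (b1, t)) c b2 ->
  rect_contour g a1 b1 a2 b2 = rect_contour g a1 b1 a2 c + rect_contour g a1 b1 c b2.
Proof.
  intros H1 H2 H3 H4. unfold rect_contour.
  rewrite <- (CInt_Chasles _ a2 c b2 H1 H2), <- (CInt_Chasles _ a2 c b2 H3 H4). ring.
Qed.

(** * Goursat's theorem for rectangles *)

Record rect := mk_rect { left : R; right : R; bottom : R; top : R }.

Definition width r := (right r - left r)%R.
Definition height r := (top r - bottom r)%R.
Definition rect_wf r := left r <= right r /\ bottom r <= top r.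
Definition in_rect r (z : Complex.C) := left r <= Re z <= right r /\ bottom r <= Im z <= top r.
Definition contour g r := rect_contour g (left r) (right r) (bottom r) (top r).

Definition subrect q r := left r <= left q /\ right q <= right r /\ bottom r <= bottom q /\ top q <= top r.
Definition half_subrect q r := subrect q r /\ width q = (width r / 2)%R /\ height q = (height r / 2)%R.

Definition quarter (i j : bool) r :=
  let mx := ((left r + right r) / 2)%R in
  let my := ((bottom r + top r) / 2)%R in
  mk_rect (if i then mx else left r) (if i then right r else mx)
          (if j then my else bottom r) (if j then top r else my).

Lemma quarter_half_subrect i j r : rect_wf r -> half_subrect (quarter i j r) r.
Proof. intros [W1 W2]. unfold half_subrect, subrect, width, height; destruct i, j; simpl; repeat split; lra. Qed.

Lemma contour_quarters g r : rect_wf r -> Cderivable_on_rect g (left r) (right r) (bottom r) (top r) ->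
  contour g r = contour g (quarter false false r) + contour g (quarter true false r)
              + contour g (quarter false true r) + contour g (quarter true true r).
Proof.
  intros [W1 W2] H. unfold contour, quarter; simpl.
  set (mx := ((left r + right r) / 2)%R). set (my := ((bottom r + top r) / 2)%R).
  assert (ex_h : forall s t y, left r <= s -> s <= t -> t <= right r -> bottom r <= y <= top r ->
    ex_CInt (fun u => g (u, y)) s t) by (intros; apply ex_CInt_horizontal; auto; intros; apply H; simpl; lra).
  assert (ex_v : forall s t x, bottom r <= s -> s <= t -> t <= top r -> left r <= x <= right r ->
    ex_CInt (fun u => g (x, u)) s t) by (intros; apply ex_CInt_vertical; auto; intros; apply H; simpl; lra).
  rewrite (rect_contour_split_x g (left r) mx (right r)) by (apply ex_h; unfold mx, my; lra).
  rewrite (rect_contour_split_y g (left r) mx (bottom r) my (top r)) by (apply ex_v; unfold mx, my; lra).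
  rewrite (rect_contour_split_y g mx (right r) (bottom r) my (top r)) by (apply ex_v; unfold mx, my; lra).
  ring.
Qed.

Definition goursat_quarter g r :=
  let big q := Rle_dec (Cmod (contour g r) / 4) (Cmod (contour g q)) in
  if big (quarter false false r) then quarter false false r
  else if big (quarter true false r) then quarter true false r
  else if big (quarter false true r) then quarter false true r
  else quarter true true r.

Lemma goursat_quarter_half_subrect g r : rect_wf r -> half_subrect (goursat_quarter g r) r.
Proof. intros W. unfold goursat_quarter. repeat destruct Rle_dec; apply quarter_half_subrect; auto. Qed.

Lemma goursat_quarter_contour g r : rect_wf r -> Cderivable_on_rect g (left r) (right r) (bottom r) (top r) ->
  Cmod (contour g r) <= 4 * Cmod (contour g (goursat_quarter g r)).
Proof.
  intros W H. unfold goursat_quarter.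
  destruct Rle_dec; [lra|]. destruct Rle_dec; [lra|]. destruct Rle_dec; [lra|].
  pose proof (contour_quarters g r W H) as E. rewrite E in n, n0, n1 at 1. rewrite E at 1.
  revert n n0 n1. generalize (contour g (quarter false false r)) (contour g (quarter true false r))
    (contour g (quarter false true r)) (contour g (quarter true true r)). intros a b c d Ha Hb Hc.
  pose proof (Cmod_triangle (a + b + c) d). pose proof (Cmod_triangle (a + b) c).
  pose proof (Cmod_triangle a b). lra.
Qed.

Fixpoint goursat_rects g r0 n := match n with O => r0 | S n => goursat_quarter g (goursat_rects g r0 n) end.

Section NestedRectangles.

Variable rs : nat -> rect.
Hypothesis rs_wf0 : rect_wf (rs O).
Hypothesis rs_half : forall n, half_subrect (rs (S n)) (rs n).

Lemma half_subrects_size n :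
  width (rs n) = (width (rs O) / 2 ^ n)%R /\ height (rs n) = (height (rs O) / 2 ^ n)%R.
Proof.
  induction n as [|n IH]; simpl; [split; field|].
  destruct (rs_half n) as (_ & Ew & Eh). rewrite Ew, Eh, (proj1 IH), (proj2 IH).
  assert (0 < 2 ^ n) by (apply pow_lt; lra). split; field; lra.
Qed.

Lemma half_subrects_wf n : rect_wf (rs n).
Proof.
  destruct (half_subrects_size n) as [Ew Eh]. destruct rs_wf0.
  assert (0 < 2 ^ n) by (apply pow_lt; lra).
  unfold rect_wf, width, height in *. split.
  - assert (0 <= (right (rs O) - left (rs O)) / 2 ^ n) by (apply Rdiv_le_0_compat; lra). lra.
  - assert (0 <= (top (rs O) - bottom (rs O)) / 2 ^ n) by (apply Rdiv_le_0_compat; lra). lra.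
Qed.

Lemma half_subrects_nested n k : (n <= k)%nat -> subrect (rs k) (rs n).
Proof.
  induction 1 as [|k _ IH]; [unfold subrect; lra|].
  destruct (rs_half k) as [S _]. unfold subrect in *. lra.
Qed.

Lemma half_subrects_common_point : exists p, forall n, in_rect (rs n) p.
Proof.
  assert (Cross : forall n k, left (rs n) <= right (rs k) /\ bottom (rs n) <= top (rs k)).
  { intros n k. destruct (half_subrects_wf n), (half_subrects_wf k).
    destruct (Nat.le_ge_cases n k) as [Hl|Hl]; pose proof (half_subrects_nested _ _ Hl);
      unfold subrect in *; lra. }
  destruct (completeness (fun x => exists n, x = left (rs n))) as [p1 [Ub1 Lub1]].
  { exists (right (rs O)). intros x [n ->]. apply Cross. }
  { exists (left (rs O)), O. reflexivity. }
  destruct (completeness (fun x => exists n, x = bottom (rs n))) as [p2 [Ub2 Lub2]].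
  { exists (top (rs O)). intros x [n ->]. apply Cross. }
  { exists (bottom (rs O)), O. reflexivity. }
  exists (p1, p2). intros n. unfold in_rect; simpl. repeat split.
  - apply Ub1. eauto.
  - apply Lub1. intros x [k ->]. apply Cross.
  - apply Ub2. eauto.
  - apply Lub2. intros x [k ->]. apply Cross.
Qed.

End NestedRectangles.

Lemma exists_pow2_inv_lt (x d : R) : 0 < d -> exists n : nat, x / 2 ^ n < d.
Proof.
  intros Hd.
  assert (Hn : forall n : nat, INR n <= 2 ^ n).
  { induction n; [simpl; lra|]. rewrite S_INR. simpl. pose proof (pow_R1_Rle 2 n ltac:(lra)). lra. }
  destruct (Rle_lt_dec x 0) as [Hx|Hx]; [exists O; simpl; rewrite Rdiv_1_r; lra|].
  destruct (archimed (x / d)) as [H1 _].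
  assert (Hz : (0 <= up (x / d))%Z).
  { apply le_IZR. assert (0 < x / d) by (apply Rdiv_lt_0_compat; lra). lra. }
  exists (Z.to_nat (up (x / d))).
  assert (Hp : 0 < 2 ^ Z.to_nat (up (x / d))) by (apply pow_lt; lra).
  specialize (Hn (Z.to_nat (up (x / d)))). rewrite INR_IZR_INZ, Z2Nat.id in Hn by auto.
  apply Rlt_div_l; auto.
  apply (Rmult_lt_compat_l d) in H1; auto. replace (d * (x / d))%R with x in H1 by (field; lra). nra.
Qed.

Lemma Rle_0_of_le_eps_mult x K : 0 < K -> (forall eps, 0 < eps -> x <= eps * K) -> x <= 0.
Proof.
  intros HK H. destruct (Rle_lt_dec x 0); auto.
  specialize (H (x / (2 * K))%R ltac:(apply Rdiv_lt_0_compat; lra)).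
  replace (x / (2 * K) * K)%R with (x / 2)%R in H by (field; lra). lra.
Qed.

(* Subtracting the tangent map [g p + (z - p) l], whose contour integral vanishes. *)
Lemma contour_linearization_le g r p l eps D : rect_wf r ->
  Cderivable_on_boundary g (left r) (right r) (bottom r) (top r) ->
  (forall z, on_rect_boundary (left r) (right r) (bottom r) (top r) z ->
     Cmod (z - p) <= D /\ Cmod (g z - g p - (z - p) * l) <= eps * Cmod (z - p)) ->
  0 <= eps -> Cmod (contour g r) <= 4 * (width r + height r) * (eps * D).
Proof.
  intros [W1 W2] Hg H Heps. set (aff := fun y => (g p - l * p) + l * y).
  assert (Ea : Cderivable_on_boundary aff (left r) (right r) (bottom r) (top r))
    by (intros z _; eexists; apply is_Cderive_affine).
  assert (E : contour g r = rect_contour (fun y => g y - aff y) (left r) (right r) (bottom r) (top r)).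
  { rewrite rect_contour_minus by auto. unfold aff. rewrite rect_contour_affine. unfold contour. ring. }
  rewrite E. apply rect_contour_norm_le; auto.
  - intros z Hz. destruct (Hg z Hz) as [l1 Hl1]. destruct (Ea z Hz) as [l2 Hl2].
    eexists. apply is_Cderive_minus; eauto.
  - intros z Hz. destruct (H z Hz) as [HD Hl]. unfold aff.
    replace (g z - (g p - l * p + l * z)) with (g z - g p - (z - p) * l) by ring.
    eapply Rle_trans; [exact Hl|]. apply Rmult_le_compat_l; lra.
Qed.

Lemma Cderivable_on_subrect g q r : subrect q r ->
  Cderivable_on_rect g (left r) (right r) (bottom r) (top r) ->
  Cderivable_on_rect g (left q) (right q) (bottom q) (top q).
Proof. intros Hq H z Hx Hy. unfold subrect in Hq. apply H; lra. Qed.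

Section GoursatRects.

Variables (g : Complex.C -> Complex.C) (r0 : rect).
Hypothesis r0_wf : rect_wf r0.
Hypothesis g_derivable : Cderivable_on_rect g (left r0) (right r0) (bottom r0) (top r0).

Lemma goursat_rects_half n : half_subrect (goursat_rects g r0 (S n)) (goursat_rects g r0 n).
Proof.
  assert (W : forall n, rect_wf (goursat_rects g r0 n)).
  { induction n0 as [|n0 IH]; [exact r0_wf|].
    destruct (goursat_quarter_half_subrect g _ IH) as (_ & Ew & Eh).
    destruct IH. unfold rect_wf, width, height in *. simpl. lra. }
  apply goursat_quarter_half_subrect, W.
Qed.

Lemma goursat_rects_contour n :
  Cmod (contour g r0) <= 4 ^ n * Cmod (contour g (goursat_rects g r0 n)).
Proof.
  induction n as [|n IH]; [simpl; lra|].
  set (r := goursat_rects g r0 n) in *.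
  assert (Hr : Cderivable_on_rect g (left r) (right r) (bottom r) (top r)).
  { apply (Cderivable_on_subrect g r r0); auto.
    apply (half_subrects_nested (goursat_rects g r0) goursat_rects_half O n). lia. }
  pose proof (goursat_quarter_contour g r (half_subrects_wf _ r0_wf goursat_rects_half n) Hr).
  pose proof (pow_lt 4 n ltac:(lra)). simpl. fold r. nra.
Qed.

End GoursatRects.

Lemma Cmod_le_rect_diam a1 b1 a2 b2 w z : a1 <= Re w <= b1 -> a2 <= Im w <= b2 ->
  a1 <= Re z <= b1 -> a2 <= Im z <= b2 -> Cmod (w - z) <= b1 - a1 + (b2 - a2).
Proof.
  intros. eapply Rle_trans; [apply Cmod_le_Rabs_Re_Im|].
  replace (Re (w - z)) with (Re w - Re z)%R by (unfold Re; simpl; ring).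
  replace (Im (w - z)) with (Im w - Im z)%R by (unfold Im; simpl; ring).
  assert (Rabs (Re w - Re z) <= b1 - a1) by (apply Rabs_le; lra).
  assert (Rabs (Im w - Im z) <= b2 - a2) by (apply Rabs_le; lra). lra.
Qed.

Theorem Goursat g a1 b1 a2 b2 : a1 <= b1 -> a2 <= b2 ->
  Cderivable_on_rect g a1 b1 a2 b2 -> rect_contour g a1 b1 a2 b2 = 0.
Proof.
  intros H1 H2 Hg. set (r0 := mk_rect a1 b1 a2 b2).
  assert (W0 : rect_wf r0) by (split; simpl; lra).
  set (rs := goursat_rects g r0). set (D0 := (width r0 + height r0)%R).
  assert (Hhalf := goursat_rects_half g r0 W0).
  destruct (half_subrects_common_point rs W0 Hhalf) as [p Hp].
  destruct (Hg p) as [l Hl]; try apply (Hp O).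
  apply Cmod_eq_0, Rle_antisym; [|apply Cmod_ge_0].
  apply (Rle_0_of_le_eps_mult _ (4 * D0 * D0 + 1)).
  { assert (0 <= D0) by (unfold D0, width, height; simpl; lra). nra. }
  intros eps Heps.
  destruct (is_Cderive_approx _ _ _ Hl eps Heps) as [d [Hd Hd2]].
  destruct (exists_pow2_inv_lt D0 d Hd) as [n Hn].
  destruct (half_subrects_size rs Hhalf n) as [Ew Eh]. change (rs O) with r0 in Ew, Eh.
  assert (Wn := half_subrects_wf rs W0 Hhalf n).
  assert (Sub := half_subrects_nested rs Hhalf O n ltac:(lia)).
  assert (Hpow : 0 < 2 ^ n) by (apply pow_lt; lra).
  assert (EDn : (width (rs n) + height (rs n) = D0 / 2 ^ n)%R) by (rewrite Ew, Eh; unfold D0; field; lra).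
  assert (Bn : Cmod (contour g (rs n)) <= 4 * (D0 / 2 ^ n) * (eps * (D0 / 2 ^ n))).
  { rewrite <- EDn. apply (contour_linearization_le g (rs n) p l); [exact Wn | | |lra].
    - apply Cderivable_on_rect_boundary; try apply Wn.
      apply (Cderivable_on_subrect g (rs n) r0); auto.
    - intros z Hz. destruct (on_rect_boundary_in _ _ _ _ _ (proj1 Wn) (proj2 Wn) Hz) as [Z1 Z2].
      destruct (Hp n) as [P1 P2].
      assert (Hzp : Cmod (z - p) <= width (rs n) + height (rs n)) by (apply Cmod_le_rect_diam; lra).
      split; [exact Hzp|]. apply Hd2. lra. }
  pose proof (goursat_rects_contour g r0 W0 Hg n) as K.
  assert (E4 : (4 ^ n = 2 ^ n * 2 ^ n)%R) by (rewrite <- Rpow_mult_distr; f_equal; lra).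
  eapply Rle_trans; [exact K|].
  apply Rle_trans with (4 ^ n * (4 * (D0 / 2 ^ n) * (eps * (D0 / 2 ^ n))))%R.
  - apply Rmult_le_compat_l; [rewrite E4; nra | exact Bn].
  - rewrite E4. replace (2 ^ n * 2 ^ n * (4 * (D0 / 2 ^ n) * (eps * (D0 / 2 ^ n))))%R
      with (eps * (4 * D0 * D0))%R by (field; lra). nra.
Qed.

(** * The Cauchy integral formula on rectangles *)

Definition Cderivable_on_rect_except g a1 b1 a2 b2 (z : Complex.C) : Prop :=
  forall w, a1 <= Re w <= b1 -> a2 <= Im w <= b2 -> w <> z -> exists l, is_Cderive g w l.

Lemma Cderivable_on_rect_except_sub g a1 b1 a2 b2 z c1 d1 c2 d2 :
  Cderivable_on_rect_except g a1 b1 a2 b2 z -> a1 <= c1 -> d1 <= b1 -> a2 <= c2 -> d2 <= b2 ->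
  (d1 < Re z \/ Re z < c1 \/ d2 < Im z \/ Im z < c2) -> Cderivable_on_rect g c1 d1 c2 d2.
Proof. intros H A1 A2 A3 A4 Hz w W1 W2. apply H; try lra. intros ->. lra. Qed.

(* The four rectangles around the square [x-h, x+h] x [y-h, y+h] carry no contour integral. *)
Lemma rect_contour_except_square g a1 b1 a2 b2 x y h :
  Cderivable_on_rect_except g a1 b1 a2 b2 (x, y) -> 0 < h ->
  a1 < x - h -> x + h < b1 -> a2 < y - h -> y + h < b2 ->
  rect_contour g a1 b1 a2 b2 = rect_contour g (x - h) (x + h) (y - h) (y + h).
Proof.
  intros H Hh A1 A2 A3 A4.
  assert (ex_h : forall s t v, a1 <= s -> s <= t -> t <= b1 -> a2 <= v <= b2 -> v <> y ->
    ex_CInt (fun u => g (u, v)) s t).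
  { intros s t v S1 S2 S3 V1 V2. apply ex_CInt_horizontal; auto. intros u Hu.
    apply H; simpl; try lra. intros E. apply V2. now injection E. }
  assert (ex_v : forall s t v, a2 <= s -> s <= t -> t <= b2 -> a1 <= v <= b1 -> v <> x ->
    ex_CInt (fun u => g (v, u)) s t).
  { intros s t v S1 S2 S3 V1 V2. apply ex_CInt_vertical; auto. intros u Hu.
    apply H; simpl; try lra. intros E. apply V2. now injection E. }
  assert (Z : forall c1 d1 c2 d2, c1 <= d1 -> c2 <= d2 -> a1 <= c1 -> d1 <= b1 -> a2 <= c2 -> d2 <= b2 ->
    (d1 < x \/ x < c1 \/ d2 < y \/ y < c2) -> rect_contour g c1 d1 c2 d2 = 0).
  { intros. apply Goursat; auto. eapply Cderivable_on_rect_except_sub; eauto. }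
  rewrite (rect_contour_split_x g a1 (x - h) b1) by (apply ex_h; lra).
  rewrite (Z a1 (x - h)%R a2 b2) by lra.
  rewrite (rect_contour_split_x g (x - h) (x + h) b1) by (apply ex_h; lra).
  rewrite (Z (x + h)%R b1 a2 b2) by lra.
  rewrite (rect_contour_split_y g (x - h) (x + h) a2 (y - h) b2) by (apply ex_v; lra).
  rewrite (Z (x - h)%R (x + h)%R a2 (y - h)%R) by lra.
  rewrite (rect_contour_split_y g (x - h) (x + h) (y - h) (y + h) b2) by (apply ex_v; lra).
  rewrite (Z (x - h)%R (x + h)%R (y + h)%R b2) by lra.
  ring.
Qed.

Lemma Goursat_except g a1 b1 a2 b2 x y M d0 : Cderivable_on_rect_except g a1 b1 a2 b2 (x, y) ->
  a1 < x < b1 -> a2 < y < b2 -> 0 < d0 ->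
  (forall w, Cmod (w - (x, y)) < d0 -> Cmod (g w) <= M) -> rect_contour g a1 b1 a2 b2 = 0.
Proof.
  intros H Hx Hy Hd HM.
  assert (M0 : 0 <= M).
  { eapply Rle_trans; [apply Cmod_ge_0 | apply (HM (x, y))].
    replace ((x, y) - (x, y)) with (RtoC 0) by ring. rewrite Cmod_0. auto. }
  set (hm := Rmin (Rmin (x - a1) (b1 - x)) (Rmin (Rmin (y - a2) (b2 - y)) d0)).
  assert (B : 0 < hm /\ hm <= x - a1 /\ hm <= b1 - x /\ hm <= y - a2 /\ hm <= b2 - y /\ hm <= d0).
  { unfold hm. pose proof (Rmin_l (x - a1) (b1 - x)). pose proof (Rmin_r (x - a1) (b1 - x)).
    pose proof (Rmin_l (y - a2) (b2 - y)). pose proof (Rmin_r (y - a2) (b2 - y)).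
    pose proof (Rmin_l (Rmin (y - a2) (b2 - y)) d0). pose proof (Rmin_r (Rmin (y - a2) (b2 - y)) d0).
    pose proof (Rmin_l (Rmin (x - a1) (b1 - x)) (Rmin (Rmin (y - a2) (b2 - y)) d0)).
    pose proof (Rmin_r (Rmin (x - a1) (b1 - x)) (Rmin (Rmin (y - a2) (b2 - y)) d0)).
    repeat split; try lra. repeat apply Rmin_pos; lra. }
  apply Cmod_eq_0, Rle_antisym; [|apply Cmod_ge_0].
  apply (Rle_0_of_le_eps_mult _ (16 * M + 1)); [lra|]. intros eps Heps.
  set (h := Rmin (hm / 4) eps).
  assert (Hh : 0 < h /\ h <= hm / 4 /\ h <= eps)
    by (unfold h; pose proof (Rmin_l (hm / 4) eps); pose proof (Rmin_r (hm / 4) eps);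
        repeat split; try lra; apply Rmin_pos; lra).
  destruct B as (B0 & B1 & B2 & B3 & B4 & B5). destruct Hh as (H0 & Hh1 & Hh2). clearbody h hm.
  rewrite (rect_contour_except_square g a1 b1 a2 b2 x y h) by (auto; lra).
  eapply Rle_trans; [apply (rect_contour_norm_le g _ _ _ _ M); try lra|].
  - intros w Hw. destruct (on_rect_boundary_in (x - h) (x + h) (y - h) (y + h) w ltac:(lra) ltac:(lra) Hw).
    apply H; try lra. intros ->. unfold on_rect_boundary in Hw; simpl in Hw. destruct Hw as [[_ [E|E]]|[_ [E|E]]]; lra.
  - intros w Hw. destruct (on_rect_boundary_in (x - h) (x + h) (y - h) (y + h) w ltac:(lra) ltac:(lra) Hw).
    apply HM. eapply Rle_lt_trans; [apply Cmod_le_Rabs_Re_Im|].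
    replace (Re (w - (x, y))) with (Re w - x)%R by (unfold Re; simpl; ring).
    replace (Im (w - (x, y))) with (Im w - y)%R by (unfold Im; simpl; ring).
    assert (Rabs (Re w - x) <= h) by (apply Rabs_le; lra).
    assert (Rabs (Im w - y) <= h) by (apply Rabs_le; lra). lra.
  - replace (x + h - (x - h) + (y + h - (y - h)))%R with (4 * h)%R by ring.
    assert (h * M <= eps * M)%R by (apply Rmult_le_compat_r; lra). nra.
Qed.

Lemma Cmod_difference_quotient_le f z l d : is_Cderive f z l ->
  (forall w, Cmod (w - z) < d -> Cmod (f w - f z - (w - z) * l) <= 1 * Cmod (w - z)) ->
  forall w, Cmod (w - z) < d -> Cmod ((f w - f z) * / (w - z)) <= Cmod l + 1.
Proof.
  intros Hl Hd w Hw. pose proof (Cmod_ge_0 l). destruct (Ceq_dec w z) as [->|E].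
  - replace (f z - f z) with (RtoC 0) by ring. rewrite Cmult_0_l, Cmod_0. lra.
  - assert (Hp : 0 < Cmod (w - z)) by exact (proj1 (Cmod_gt_0 _) (Cminus_neq_0 _ _ E)).
    rewrite Cmod_mult, Cmod_inv by (apply Cminus_neq_0; auto).
    assert (Cmod (f w - f z) <= (Cmod l + 1) * Cmod (w - z)).
    { replace (f w - f z) with ((f w - f z - (w - z) * l) + (w - z) * l) by ring.
      eapply Rle_trans; [apply Cmod_triangle|]. rewrite Cmod_mult. specialize (Hd w Hw). lra. }
    apply (Rmult_le_reg_r (Cmod (w - z))); auto.
    rewrite Rmult_assoc, Rinv_l by lra. lra.
Qed.

Lemma rect_contour_difference_quotient f a1 b1 a2 b2 x y : Cderivable_on_rect f a1 b1 a2 b2 ->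
  a1 < x < b1 -> a2 < y < b2 -> rect_contour (fun w => (f w - f (x, y)) * / (w - (x, y))) a1 b1 a2 b2 = 0.
Proof.
  intros Hf Hx Hy. set (z := (x, y) : Complex.C).
  destruct (Hf z) as [l Hl]; try (simpl; lra).
  destruct (is_Cderive_approx _ _ _ Hl 1%R ltac:(lra)) as [d [Hd Hd2]].
  apply (Goursat_except _ a1 b1 a2 b2 x y (Cmod l + 1) d); auto.
  - intros w W1 W2 Wz. destruct (Hf w W1 W2) as [lw Hlw].
    eexists. apply is_Cderive_mult.
    + apply is_Cderive_minus; [exact Hlw | apply is_Cderive_const].
    + apply is_Cderive_inv; [|apply Cminus_neq_0; auto].
      apply is_Cderive_minus; [apply is_Cderive_id | apply is_Cderive_const].
  - exact (Cmod_difference_quotient_le f z l d Hl Hd2).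
Qed.

Theorem rect_contour_Cauchy f a1 b1 a2 b2 x y : Cderivable_on_rect f a1 b1 a2 b2 -> a1 < x < b1 -> a2 < y < b2 ->
  rect_contour (fun w => f w * / (w - (x, y))) a1 b1 a2 b2
  = f (x, y) * rect_contour (fun w => / (w - (x, y))) a1 b1 a2 b2.
Proof.
  intros Hf Hx Hy. set (z := (x, y) : Complex.C).
  assert (W1 : a1 <= b1) by lra. assert (W2 : a2 <= b2) by lra.
  assert (Ek : Cderivable_on_boundary (fun w => / (w - z)) a1 b1 a2 b2).
  { intros w Hw. eexists. apply is_Cderive_inv.
    - apply is_Cderive_minus; [apply is_Cderive_id | apply is_Cderive_const].
    - apply Cminus_neq_0. intros ->. unfold z in Hw. destruct Hw as [[_ [E|E]]|[_ [E|E]]]; simpl in E; lra. }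
  assert (Ef : Cderivable_on_boundary (fun w => f w * / (w - z)) a1 b1 a2 b2).
  { intros w Hw. destruct (on_rect_boundary_in _ _ _ _ _ W1 W2 Hw) as [Z1 Z2].
    destruct (Hf w Z1 Z2) as [lw Hlw]. destruct (Ek w Hw) as [li Hli].
    eexists. apply is_Cderive_mult; eauto. }
  assert (Efz : Cderivable_on_boundary (fun w => f z * / (w - z)) a1 b1 a2 b2).
  { intros w Hw. destruct (Ek w Hw) as [li Hli]. eexists. apply is_Cderive_mult; [apply is_Cderive_const | eauto]. }
  rewrite <- (rect_contour_scal (f z) (fun w => / (w - z))) by auto.
  assert (E : rect_contour (fun w => f w * / (w - z)) a1 b1 a2 b2
              - rect_contour (fun w => f z * / (w - z)) a1 b1 a2 b2 = 0).
  { rewrite <- rect_contour_minus, <- (rect_contour_difference_quotient f a1 b1 a2 b2 x y) by auto.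
    apply rect_contour_ext; auto. intros w _. unfold z. ring. }
  rewrite <- (Cplus_0_l (rect_contour (fun w => f z * / (w - z)) a1 b1 a2 b2)), <- E. ring.
Qed.

(** * Holomorphy of Cauchy transforms *)

Lemma is_Cderive_of_quadratic_remainder F z0 L r K : 0 < r -> 0 <= K ->
  (forall z, Cmod (z - z0) < r -> Cmod (F z - F z0 - (z - z0) * L) <= K * (Cmod (z - z0) * Cmod (z - z0))) ->
  is_Cderive F z0 L.
Proof.
  intros Hr HK H. apply is_Cderive_of_approx. intros eps Heps.
  exists (Rmin r (eps / (K + 1))). split; [apply Rmin_pos; auto; apply Rdiv_lt_0_compat; lra|].
  intros z Hz. assert (H1 : Cmod (z - z0) < r) by (eapply Rlt_le_trans; [exact Hz | apply Rmin_l]).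
  assert (H2 : Cmod (z - z0) < eps / (K + 1)) by (eapply Rlt_le_trans; [exact Hz | apply Rmin_r]).
  eapply Rle_trans; [apply H; auto|].
  pose proof (Cmod_ge_0 (z - z0)).
  assert (K * Cmod (z - z0) <= eps).
  { apply Rle_trans with ((K + 1) * (eps / (K + 1)))%R; [nra | right; field; lra]. }
  nra.
Qed.

Lemma is_Cderive_rect_contour_param (H : Complex.C -> Complex.C -> Complex.C) H' a1 b1 a2 b2 z0 r K :
  a1 <= b1 -> a2 <= b2 -> 0 < r -> 0 <= K ->
  (forall z, Cmod (z - z0) < r -> Cderivable_on_boundary (H z) a1 b1 a2 b2) ->
  Cderivable_on_boundary H' a1 b1 a2 b2 ->
  (forall z w, Cmod (z - z0) < r -> on_rect_boundary a1 b1 a2 b2 w ->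
     Cmod (H z w - H z0 w - (z - z0) * H' w) <= K * (Cmod (z - z0) * Cmod (z - z0))) ->
  is_Cderive (fun z => rect_contour (H z) a1 b1 a2 b2) z0 (rect_contour H' a1 b1 a2 b2).
Proof.
  intros W1 W2 Hr HK HH HH' Hrem.
  assert (Hz0 : Cmod (z0 - z0) < r) by (replace (z0 - z0) with (RtoC 0) by ring; rewrite Cmod_0; lra).
  apply (is_Cderive_of_quadratic_remainder _ _ _ r (4 * (b1 - a1 + (b2 - a2)) * K)); auto.
  { apply Rmult_le_pos; lra. }
  intros z Hz.
  assert (Dz := HH z Hz). assert (D0 := HH z0 Hz0).
  assert (Dd : Cderivable_on_boundary (fun w => H z w - H z0 w) a1 b1 a2 b2).
  { intros w Hw. destruct (Dz w Hw) as [l1 K1]. destruct (D0 w Hw) as [l2 K2].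
    eexists. apply is_Cderive_minus; eauto. }
  assert (Ds : Cderivable_on_boundary (fun w => (z - z0) * H' w) a1 b1 a2 b2).
  { intros w Hw. destruct (HH' w Hw) as [l3 K3]. eexists.
    apply is_Cderive_mult; [apply is_Cderive_const | eauto]. }
  assert (E : rect_contour (H z) a1 b1 a2 b2 - rect_contour (H z0) a1 b1 a2 b2
              - (z - z0) * rect_contour H' a1 b1 a2 b2
            = rect_contour (fun w => H z w - H z0 w - (z - z0) * H' w) a1 b1 a2 b2).
  { rewrite (rect_contour_minus (fun w => H z w - H z0 w)), rect_contour_minus, rect_contour_scal; auto. }
  rewrite E, Rmult_assoc. apply rect_contour_norm_le; auto.
  intros w Hw. destruct (Dd w Hw) as [l1 K1]. destruct (Ds w Hw) as [l2 K2].
  eexists. apply is_Cderive_minus; eauto.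
Qed.

Lemma Cderivable_on_boundary_bounded h a1 b1 a2 b2 : a1 <= b1 -> a2 <= b2 ->
  Cderivable_on_boundary h a1 b1 a2 b2 ->
  exists M, 0 <= M /\ forall w, on_rect_boundary a1 b1 a2 b2 w -> Cmod (h w) <= M.
Proof.
  intros H1 H2 H.
  assert (Side : forall (p : R -> Complex.C) a b, a <= b -> unit_speed p ->
    (forall t, a <= t <= b -> on_rect_boundary a1 b1 a2 b2 (p t)) ->
    exists M, forall t, a <= t <= b -> Cmod (h (p t)) <= M).
  { intros p a b Hab Hp Hb. apply bounded_Cderive_along; auto. }
  destruct (Side (fun t => (t, a2)) a1 b1 H1 (unit_speed_horizontal a2)
    ltac:(intros t Ht; left; simpl; auto)) as [M1 HM1].
  destruct (Side (fun t => (t, b2)) a1 b1 H1 (unit_speed_horizontal b2)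
    ltac:(intros t Ht; left; simpl; auto)) as [M2 HM2].
  destruct (Side (fun t => (a1, t)) a2 b2 H2 (unit_speed_vertical a1)
    ltac:(intros t Ht; right; simpl; auto)) as [M3 HM3].
  destruct (Side (fun t => (b1, t)) a2 b2 H2 (unit_speed_vertical b1)
    ltac:(intros t Ht; right; simpl; auto)) as [M4 HM4].
  exists (Rmax 0 (Rmax (Rmax M1 M2) (Rmax M3 M4))). split; [apply Rmax_l|].
  intros [wr wi] Hw. eapply Rle_trans; [|apply Rmax_r].
  pose proof (Rmax_l (Rmax M1 M2) (Rmax M3 M4)). pose proof (Rmax_r (Rmax M1 M2) (Rmax M3 M4)).
  pose proof (Rmax_l M1 M2). pose proof (Rmax_r M1 M2). pose proof (Rmax_l M3 M4). pose proof (Rmax_r M3 M4).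
  unfold on_rect_boundary in Hw; simpl in Hw. destruct Hw as [[Hr [E|E]]|[Hr [E|E]]]; subst.
  - specialize (HM1 wr Hr). lra.
  - specialize (HM2 wr Hr). lra.
  - specialize (HM3 wi Hr). lra.
  - specialize (HM4 wi Hr). lra.
Qed.

Definition boundary_dist a1 b1 a2 b2 (z : Complex.C) : R :=
  Rmin (Rmin (Re z - a1) (b1 - Re z)) (Rmin (Im z - a2) (b2 - Im z)).

Lemma boundary_dist_pos a1 b1 a2 b2 z : a1 < Re z < b1 -> a2 < Im z < b2 -> 0 < boundary_dist a1 b1 a2 b2 z.
Proof. intros; unfold boundary_dist; repeat apply Rmin_pos; lra. Qed.

Lemma boundary_dist_le a1 b1 a2 b2 z w : on_rect_boundary a1 b1 a2 b2 w -> boundary_dist a1 b1 a2 b2 z <= Cmod (w - z).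
Proof.
  intros Hw. unfold boundary_dist.
  pose proof (Rmin_l (Rmin (Re z - a1) (b1 - Re z)) (Rmin (Im z - a2) (b2 - Im z))).
  pose proof (Rmin_r (Rmin (Re z - a1) (b1 - Re z)) (Rmin (Im z - a2) (b2 - Im z))).
  pose proof (Rmin_l (Re z - a1) (b1 - Re z)). pose proof (Rmin_r (Re z - a1) (b1 - Re z)).
  pose proof (Rmin_l (Im z - a2) (b2 - Im z)). pose proof (Rmin_r (Im z - a2) (b2 - Im z)).
  pose proof (Rabs_Re_minus_le w z). pose proof (Rabs_Im_minus_le w z).
  pose proof (Rabs_minus_sym (Re w) (Re z)). pose proof (Rle_abs (Re w - Re z)). pose proof (Rle_abs (Re z - Re w)).
  pose proof (Rabs_minus_sym (Im w) (Im z)). pose proof (Rle_abs (Im w - Im z)). pose proof (Rle_abs (Im z - Im w)).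
  destruct Hw as [[_ [E|E]]|[_ [E|E]]]; rewrite E in *; lra.
Qed.

Lemma Cmod_div_le (num den : Complex.C) X Y : Cmod num <= X -> 0 < Y -> Y <= Cmod den ->
  Cmod (num / den) <= X / Y.
Proof.
  intros HX HY HD. assert (den <> 0) by (intros ->; rewrite Cmod_0 in HD; lra).
  rewrite Cmod_div by auto. pose proof (Cmod_ge_0 num).
  apply Rmult_le_compat; auto; [left; apply Rinv_0_lt_compat; lra | apply Rinv_le_contravar; auto].
Qed.

Section CauchyTransform.

Variables (h : Complex.C -> Complex.C) (a1 b1 a2 b2 : R).
Hypothesis h_derivable : Cderivable_on_boundary h a1 b1 a2 b2.

Definition cauchy_transform (k : nat) (z : Complex.C) : Complex.C :=
  rect_contour (fun w => h w * / (w - z) ^ k) a1 b1 a2 b2.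

Variable z0 : Complex.C.
Hypotheses (z0_re : a1 < Re z0 < b1) (z0_im : a2 < Im z0 < b2).

Let d := boundary_dist a1 b1 a2 b2 z0.

Lemma boundary_dist_half z w : Cmod (z - z0) < d / 2 -> on_rect_boundary a1 b1 a2 b2 w ->
  d / 2 <= Cmod (w - z) /\ w - z <> 0.
Proof.
  intros Hz Hw. pose proof (boundary_dist_le _ _ _ _ z0 _ Hw).
  pose proof (boundary_dist_pos _ _ _ _ _ z0_re z0_im).
  pose proof (Cmod_le_minus (w - z0) (w - z)). replace (w - z0 - (w - z)) with (z - z0) in H1 by ring.
  unfold d in *. split; [lra|]. intros E. rewrite E, Cmod_0 in *. lra.
Qed.

Lemma kernel_Cderivable_on_boundary k z : Cmod (z - z0) < d / 2 ->
  Cderivable_on_boundary (fun w => h w * / (w - z) ^ k) a1 b1 a2 b2.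
Proof.
  intros Hz w Hw. destruct (h_derivable w Hw) as [l1 H1].
  destruct (ex_Cderive_pow (fun y => y - z) w 1 k) as [l2 H2].
  { eapply is_Cderive_eq; [|apply is_Cderive_minus; [apply is_Cderive_id | apply is_Cderive_const]]. ring. }
  eexists. apply is_Cderive_mult; [exact H1|]. apply is_Cderive_inv; [exact H2|].
  apply Cpow_neq_0, (boundary_dist_half z w Hz Hw).
Qed.

Lemma is_Cderive_cauchy_transform_1 : is_Cderive (cauchy_transform 1) z0 (cauchy_transform 2 z0).
Proof.
  assert (W1 : a1 <= b1) by lra. assert (W2 : a2 <= b2) by lra.
  assert (Hd : 0 < d) by apply (boundary_dist_pos _ _ _ _ _ z0_re z0_im).
  assert (Hz0 : Cmod (z0 - z0) < d / 2) by (replace (z0 - z0) with (RtoC 0) by ring; rewrite Cmod_0; lra).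
  destruct (Cderivable_on_boundary_bounded h a1 b1 a2 b2 W1 W2 h_derivable) as [M [HM0 HM]].
  set (Y := (d / 2 * (d * d))%R). assert (HY : 0 < Y) by (unfold Y; repeat apply Rmult_lt_0_compat; lra).
  apply (is_Cderive_rect_contour_param _ _ _ _ _ _ _ (d / 2) (M / Y)); auto;
    [lra | apply Rdiv_le_0_compat; lra | intros; apply kernel_Cderivable_on_boundary; auto | |].
  { apply kernel_Cderivable_on_boundary; auto. }
  intros z w Hz Hw.
  destruct (boundary_dist_half z w Hz Hw) as [Fz Nz]. destruct (boundary_dist_half z0 w Hz0 Hw) as [_ Nz0].
  pose proof (boundary_dist_le _ _ _ _ z0 _ Hw) as Fz0. fold d in Fz0.
  replace (h w * / (w - z) ^ 1 - h w * / (w - z0) ^ 1 - (z - z0) * (h w * / (w - z0) ^ 2))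
    with (h w * ((z - z0) * (z - z0)) / ((w - z) * ((w - z0) * (w - z0)))) by (simpl; field; auto).
  replace (M / Y * (Cmod (z - z0) * Cmod (z - z0)))%R with (M * (Cmod (z - z0) * Cmod (z - z0)) / Y)%R
    by (field; lra).
  apply Cmod_div_le; auto.
  - rewrite !Cmod_mult. apply Rmult_le_compat_r; [nra | auto].
  - rewrite !Cmod_mult. unfold Y. apply Rmult_le_compat; try lra; [nra | apply Rmult_le_compat; lra].
Qed.

Lemma is_Cderive_cauchy_transform_2 :
  is_Cderive (cauchy_transform 2) z0 (2 * cauchy_transform 3 z0).
Proof.
  assert (W1 : a1 <= b1) by lra. assert (W2 : a2 <= b2) by lra.
  assert (Hd : 0 < d) by apply (boundary_dist_pos _ _ _ _ _ z0_re z0_im).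
  assert (Hz0 : Cmod (z0 - z0) < d / 2) by (replace (z0 - z0) with (RtoC 0) by ring; rewrite Cmod_0; lra).
  destruct (Cderivable_on_boundary_bounded h a1 b1 a2 b2 W1 W2 h_derivable) as [M [HM0 HM]].
  set (D := (b1 - a1 + (b2 - a2))%R).
  set (Y := (d / 2 * (d / 2) * (d * d * d))%R). assert (HY : 0 < Y) by (unfold Y; repeat apply Rmult_lt_0_compat; lra).
  unfold cauchy_transform. rewrite <- rect_contour_scal by (auto; apply kernel_Cderivable_on_boundary; auto).
  apply (is_Cderive_rect_contour_param _ _ _ _ _ _ _ (d / 2) (M * (3 * D + d) / Y)); auto; try lra.
  { apply Rdiv_le_0_compat; [apply Rmult_le_pos; unfold D; lra | lra]. }
  { intros; apply kernel_Cderivable_on_boundary; auto. }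
  { intros w Hw. destruct (kernel_Cderivable_on_boundary 3 z0 Hz0 w Hw) as [l Hl].
    eexists. apply is_Cderive_mult; [apply is_Cderive_const | exact Hl]. }
  intros z w Hz Hw.
  destruct (boundary_dist_half z w Hz Hw) as [Fz Nz]. destruct (boundary_dist_half z0 w Hz0 Hw) as [_ Nz0].
  pose proof (boundary_dist_le _ _ _ _ z0 _ Hw) as Fz0. fold d in Fz0.
  destruct (on_rect_boundary_in _ _ _ _ _ W1 W2 Hw) as [Q1 Q2].
  assert (Hwz0 : Cmod (w - z0) <= D) by (apply Cmod_le_rect_diam; lra).
  replace (h w * / (w - z) ^ 2 - h w * / (w - z0) ^ 2 - (z - z0) * (2 * (h w * / (w - z0) ^ 3)))
    with (h w * ((z - z0) * (z - z0)) * (3 * (w - z0) - 2 * (z - z0))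
          / ((w - z) * (w - z) * ((w - z0) * (w - z0) * (w - z0)))) by (simpl; field; auto).
  replace (M * (3 * D + d) / Y * (Cmod (z - z0) * Cmod (z - z0)))%R
    with (M * (Cmod (z - z0) * Cmod (z - z0)) * (3 * D + d) / Y)%R by (field; lra).
  apply Cmod_div_le; auto.
  - assert (Cmod (3 * (w - z0) - 2 * (z - z0)) <= 3 * D + d).
    { eapply Rle_trans; [apply Cmod_minus_le|]. rewrite !Cmod_mult, !Cmod_R, !Rabs_right by lra. lra. }
    pose proof (Cmod_ge_0 (z - z0)). pose proof (Cmod_ge_0 (3 * (w - z0) - 2 * (z - z0))).
    rewrite !Cmod_mult. apply Rmult_le_compat; auto.
    + apply Rmult_le_pos; [apply Cmod_ge_0 | nra].
    + apply Rmult_le_compat_r; [nra | auto].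
  - rewrite !Cmod_mult. unfold Y.
    assert (d / 2 * (d / 2) <= Cmod (w - z) * Cmod (w - z)) by (apply Rmult_le_compat; lra).
    assert (d * d <= Cmod (w - z0) * Cmod (w - z0)) by (apply Rmult_le_compat; lra).
    assert (d * d * d <= Cmod (w - z0) * Cmod (w - z0) * Cmod (w - z0)) by (apply Rmult_le_compat; nra).
    apply Rmult_le_compat; nra.
Qed.

End CauchyTransform.

(** * Holomorphy of the derivative *)

Lemma RInt_lt_0 f a b : a < b -> (forall t, a <= t <= b -> continuous f t) ->
  (forall t, a < t < b -> f t < 0) -> RInt f a b < 0.
Proof.
  intros Hab Hc Hn.
  assert (RInt f a b < RInt (fun _ => 0%R) a b) by (apply RInt_lt; auto; intros; apply continuous_const).
  rewrite RInt_const in H. unfold scal in H; simpl in H. unfold mult in H; simpl in H. lra.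
Qed.

Lemma continuous_Cinv_along (phi : Complex.C -> R) (p : R -> Complex.C) z t :
  (forall a b, Rabs (phi a - phi b) <= Cmod (a - b)) -> unit_speed p -> p t <> z ->
  continuous (fun t => phi (/ (p t - z))) t.
Proof.
  intros Hphi Hp Hz. eapply (continuous_Cderive_along phi (fun w => / (w - z)) p t _ Hphi Hp).
  apply (is_Cderive_inv (fun w => w - z)); [|apply Cminus_neq_0; auto].
  apply is_Cderive_minus; [apply is_Cderive_id | apply is_Cderive_const].
Qed.

(* The imaginary part of the contour integral is a sum of four integrals of positive functions. *)
Lemma rect_contour_Cinv_center_neq_0 x0 y0 s : 0 < s ->
  rect_contour (fun w => / (w - (x0, y0))) (x0 - s) (x0 + s) (y0 - s) (y0 + s) <> 0.
Proof.
  intros Hs E. set (z0 := (x0, y0) : Complex.C) in *.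
  assert (Pos : forall a b, b <> 0%R -> 0 < a * (a * 1) + b * (b * 1))
    by (intros a b Hb; assert (0 < b * b) by (apply Rsqr_pos_lt; auto); nra).
  assert (Pos' : forall a b, a <> 0%R -> 0 < a * (a * 1) + b * (b * 1))
    by (intros a b Ha; assert (0 < a * a) by (apply Rsqr_pos_lt; auto); nra).
  assert (Nz : forall w : Complex.C, (Re w <> x0 \/ Im w <> y0) -> w <> z0)
    by (intros w [H|H] ->; simpl in H; auto).
  assert (I1 : 0 < RInt (fun t => Im (/ ((t, (y0 - s)%R) - z0))) (x0 - s) (x0 + s)).
  { apply RInt_gt_0; [lra| |].
    - intros t _. unfold z0, Cinv; simpl. apply Rdiv_lt_0_compat; [lra | apply Pos; lra].
    - intros t _. apply (continuous_Cinv_along Im (fun t => (t, (y0 - s)%R))); [apply Rabs_Im_minus_le |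
        apply unit_speed_horizontal | apply Nz; simpl; right; lra]. }
  assert (I2 : 0 < RInt (fun t => Re (/ (((x0 + s)%R, t) - z0))) (y0 - s) (y0 + s)).
  { apply RInt_gt_0; [lra| |].
    - intros t _. unfold z0, Cinv; simpl. apply Rdiv_lt_0_compat; [lra | apply Pos'; lra].
    - intros t _. apply (continuous_Cinv_along Re (fun t => ((x0 + s)%R, t))); [apply Rabs_Re_minus_le |
        apply unit_speed_vertical | apply Nz; simpl; left; lra]. }
  assert (I3 : RInt (fun t => Im (/ ((t, (y0 + s)%R) - z0))) (x0 - s) (x0 + s) < 0).
  { apply RInt_lt_0; [lra| |].
    - intros t _. apply (continuous_Cinv_along Im (fun t => (t, (y0 + s)%R))); [apply Rabs_Im_minus_le |
        apply unit_speed_horizontal | apply Nz; simpl; right; lra].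
    - intros t _. unfold z0, Cinv; simpl. unfold Rdiv. rewrite Ropp_mult_distr_l_reverse.
      apply Ropp_lt_gt_0_contravar, Rdiv_lt_0_compat; [lra | apply Pos; lra]. }
  assert (I4 : RInt (fun t => Re (/ (((x0 - s)%R, t) - z0))) (y0 - s) (y0 + s) < 0).
  { apply RInt_lt_0; [lra| |].
    - intros t _. apply (continuous_Cinv_along Re (fun t => ((x0 - s)%R, t))); [apply Rabs_Re_minus_le |
        apply unit_speed_vertical | apply Nz; simpl; left; lra].
    - intros t _. unfold z0, Cinv; simpl. replace (x0 - s + - x0)%R with (- s)%R by ring.
      unfold Rdiv. rewrite Ropp_mult_distr_l_reverse.
      apply Ropp_lt_gt_0_contravar, Rdiv_lt_0_compat; [lra | apply Pos'; lra]. }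
  apply (f_equal Im) in E. unfold rect_contour in E.
  assert (Eim : forall A B C D : Complex.C,
    Im (A + Ci * B - C - Ci * D) = (Im A + Re B - Im C - Re D)%R) by (intros; unfold Re, Im; simpl; ring).
  rewrite Eim in E.
  unfold CInt in E. cbv delta [Re Im] beta in *. cbn [fst snd] in E. change (snd (RtoC 0)) with 0%R in E. lra.
Qed.

Lemma ex_Cderive_deriv_of_quotient f f' I I' I'' c c' c'' z0 rho : 0 < rho ->
  (forall z, Cmod (z - z0) < rho ->
     is_Cderive f z (f' z) /\ is_Cderive I z (I' z) /\ is_Cderive c z (c' z) /\ c z <> 0 /\ f z * c z = I z) ->
  is_Cderive I' z0 I'' -> is_Cderive c' z0 c'' -> exists l, is_Cderive f' z0 l.
Proof.
  intros Hrho H HI' Hc'.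
  set (G := fun z => I' z * / c z + I z * (- c' z / (c z * c z))).
  assert (Hz0 : Cmod (z0 - z0) < rho) by (replace (z0 - z0) with (RtoC 0) by ring; rewrite Cmod_0; lra).
  assert (EG : forall z, Cmod (z - z0) < rho -> f' z = G z).
  { intros z Hz. destruct (H z Hz) as (Hf & HI & Hc & Hcz & _).
    apply (is_Cderive_unique f z); [exact Hf|].
    apply (is_Cderive_ext_loc (fun y => I y * / c y) f z _ (rho - Cmod (z - z0))); [lra| |].
    - intros y Hy. assert (Hy0 : Cmod (y - z0) < rho).
      { replace (y - z0) with ((y - z) + (z - z0)) by ring.
        eapply Rle_lt_trans; [apply Cmod_triangle | lra]. }
      destruct (H y Hy0) as (_ & _ & _ & Hcy & E). rewrite <- E. field. exact Hcy.
    - eapply is_Cderive_eq; [|apply is_Cderive_mult; [exact HI | apply is_Cderive_inv; [exact Hc | exact Hcz]]].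
      unfold G. field. exact Hcz. }
  destruct (H z0 Hz0) as (_ & HI & Hc & Hcz & _).
  eexists. apply (is_Cderive_ext_loc G f' z0 _ rho Hrho); [intros y Hy; symmetry; exact (EG y Hy)|].
  apply is_Cderive_plus.
  - apply is_Cderive_mult; [exact HI' | apply is_Cderive_inv; [exact Hc | exact Hcz]].
  - apply is_Cderive_mult; [exact HI|]. apply is_Cderive_mult; [apply is_Cderive_opp, Hc'|].
    apply is_Cderive_inv; [apply is_Cderive_mult; [exact Hc | exact Hc] | apply Cmult_neq_0; exact Hcz].
Qed.

Lemma square_interior_of_Cmod_lt x0 y0 s z : Cmod (z - (x0, y0)) < s ->
  x0 - s < Re z < x0 + s /\ y0 - s < Im z < y0 + s.
Proof.
  intros Hz. pose proof (Rabs_Re_minus_le z (x0, y0)). pose proof (Rabs_Im_minus_le z (x0, y0)).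
  simpl in *. split; apply Rabs_lt_between'; lra.
Qed.

Lemma cauchy_transform_const_1 a1 b1 a2 b2 z : a1 <= b1 -> a2 <= b2 ->
  cauchy_transform (fun _ => 1) a1 b1 a2 b2 1 z = rect_contour (fun w => / (w - z)) a1 b1 a2 b2.
Proof.
  intros W1 W2. unfold cauchy_transform. apply rect_contour_ext; auto.
  intros w _. rewrite Cpow_1_r, Cmult_1_l. reflexivity.
Qed.

Lemma cauchy_transform_Cauchy f a1 b1 a2 b2 z : Cderivable_on_rect f a1 b1 a2 b2 ->
  a1 < Re z < b1 -> a2 < Im z < b2 ->
  f z * cauchy_transform (fun _ => 1) a1 b1 a2 b2 1 z = cauchy_transform f a1 b1 a2 b2 1 z.
Proof.
  destruct z as [x y]. intros Hf Hx Hy. rewrite cauchy_transform_const_1 by (simpl in *; lra).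
  unfold cauchy_transform.
  rewrite (rect_contour_ext (fun w => f w * / (w - (x, y)) ^ 1) (fun w => f w * / (w - (x, y))))
    by (try lra; intros; rewrite Cpow_1_r; reflexivity).
  symmetry. apply rect_contour_Cauchy; auto.
Qed.

(* Near [z0], [f = I / c] with the Cauchy transforms [I] of [f] and [c] of [1] over a square,
   and Cauchy transforms are holomorphic together with their derivatives. *)
Theorem ex_Cderive_deriv (f f' : Complex.C -> Complex.C) (Om : Complex.C -> Prop) :
  open Om -> (forall z, Om z -> is_Cderive f z (f' z)) -> forall z0, Om z0 -> exists l, is_Cderive f' z0 l.
Proof.
  intros HO Hf z0 Hz0. destruct (HO z0 Hz0) as [e He]. destruct z0 as [x0 y0].
  set (s := (e / 2)%R). assert (Hs : 0 < s) by (unfold s; destruct e; simpl; lra).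
  assert (Hse : s < e) by (unfold s; destruct e; simpl; lra).
  set (a1 := (x0 - s)%R). set (b1 := (x0 + s)%R). set (a2 := (y0 - s)%R). set (b2 := (y0 + s)%R).
  assert (W1 : a1 <= b1) by (unfold a1, b1; lra). assert (W2 : a2 <= b2) by (unfold a2, b2; lra).
  assert (Hfr : Cderivable_on_rect f a1 b1 a2 b2).
  { intros z Hx Hy. eexists. apply Hf, He.
    split; simpl; apply Rabs_lt_between'; unfold a1, b1, a2, b2, Re, Im in *; lra. }
  assert (Hfb := Cderivable_on_rect_boundary f a1 b1 a2 b2 W1 W2 Hfr).
  set (one := fun _ : Complex.C => RtoC 1).
  assert (Hone : Cderivable_on_boundary one a1 b1 a2 b2) by (intros w _; eexists; apply is_Cderive_const).
  set (c := cauchy_transform one a1 b1 a2 b2 1).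
  assert (Int0 : a1 < Re (x0, y0) < b1 /\ a2 < Im (x0, y0) < b2) by (simpl; unfold a1, b1, a2, b2; lra).
  destruct Int0 as [Int0x Int0y].
  assert (Hc0 : c (x0, y0) <> 0)
    by (unfold c, one; rewrite cauchy_transform_const_1 by auto; apply rect_contour_Cinv_center_neq_0, Hs).
  destruct (is_Cderive_continuous _ _ _ (is_Cderive_cauchy_transform_1 one a1 b1 a2 b2 Hone _ Int0x Int0y)
    _ (proj1 (Cmod_gt_0 _) Hc0)) as [dc [Hdc Hdc2]].
  apply (ex_Cderive_deriv_of_quotient f f' (cauchy_transform f a1 b1 a2 b2 1) (cauchy_transform f a1 b1 a2 b2 2)
    (2 * cauchy_transform f a1 b1 a2 b2 3 (x0, y0)) c (cauchy_transform one a1 b1 a2 b2 2)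
    (2 * cauchy_transform one a1 b1 a2 b2 3 (x0, y0)) _ (Rmin s dc)).
  - apply Rmin_pos; lra.
  - intros z Hz. destruct (square_interior_of_Cmod_lt x0 y0 s z) as [Zx Zy];
      [eapply Rlt_le_trans; [exact Hz | apply Rmin_l]|].
    fold a1 b1 a2 b2 in Zx, Zy.
    split; [|split; [|split; [|split]]].
    + destruct (Hfr z) as [l Hl]; try lra. apply Hf, He.
      split; simpl; apply Rabs_lt_between'; unfold a1, b1, a2, b2, Re, Im in *; lra.
    + apply is_Cderive_cauchy_transform_1; assumption.
    + apply is_Cderive_cauchy_transform_1; assumption.
    + intros E. specialize (Hdc2 z ltac:(eapply Rlt_le_trans; [exact Hz | apply Rmin_r])).
      fold c in Hdc2. rewrite E in Hdc2. replace (0 - c (x0, y0)) with (- c (x0, y0)) in Hdc2 by ring.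
      rewrite Cmod_opp in Hdc2. lra.
    + apply cauchy_transform_Cauchy; assumption.
  - apply is_Cderive_cauchy_transform_2; assumption.
  - apply is_Cderive_cauchy_transform_2; assumption.
Qed.

Open Scope R_scope.

Lemma is_derive_eq (f : R -> R) (x a b : R) : a = b -> is_derive f x a -> is_derive f x b.
Proof. now intros ->. Qed.

Lemma is_derive_of_approx (g : R -> R) x L :
  (forall eps, 0 < eps -> exists del, 0 < del /\
     forall t, Rabs (t - x) < del -> Rabs (g t - g x - (t - x) * L) <= eps * Rabs (t - x)) ->
  is_derive g x L.
Proof.
  intros H. apply is_derive_Reals. intros eps Heps.
  destruct (H (eps / 2) ltac:(lra)) as [d [Hd Hd2]].
  exists (mkposreal d Hd). intros h Hh Hhd. simpl in Hhd.
  specialize (Hd2 (x + h) ltac:(replace (x + h - x) with h by ring; auto)).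
  replace (x + h - x) with h in Hd2 by ring.
  assert (Hp : 0 < Rabs h) by (apply Rabs_pos_lt; auto).
  replace ((g (x + h) - g x) / h - L) with ((g (x + h) - g x - h * L) / h) by (field; auto).
  unfold Rdiv. rewrite Rabs_mult, Rabs_inv.
  apply Rle_lt_trans with (eps / 2 * Rabs h * / Rabs h).
  - apply Rmult_le_compat_r; auto. left; apply Rinv_0_lt_compat; auto.
  - field_simplify; lra.
Qed.

Open Scope C_scope.

Lemma is_derive_Cderive_along H (p : R -> Complex.C) (v : Complex.C) x l :
  (forall t s, p t - p s = RtoC (t - s) * v) -> Cmod v = 1%R -> is_Cderive H (p x) l ->
  is_derive (fun t => Re (H (p t))) x (Re (v * l)) /\ is_derive (fun t => Im (H (p t))) x (Im (v * l)).
Proof.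
  intros Hp Hv HD.
  assert (Ct : forall t, Cmod (p t - p x) = Rabs (t - x)) by (intros t; rewrite Hp, Cmod_mult, Hv, Cmod_R; ring).
  split; apply is_derive_of_approx; intros eps Heps;
    destruct (is_Cderive_approx _ _ _ HD eps Heps) as [d [Hd Hd2]];
    exists d; split; auto; intros t Ht;
    specialize (Hd2 (p t) ltac:(rewrite Ct; auto)); rewrite Ct in Hd2;
    eapply Rle_trans; try exact Hd2.
  - replace (Re (H (p t)) - Re (H (p x)) - (t - x) * Re (v * l))%R
      with (Re (H (p t) - H (p x) - (p t - p x) * l)) by (rewrite Hp; unfold Re; simpl; ring).
    apply re_le_Cmod.
  - replace (Im (H (p t)) - Im (H (p x)) - (t - x) * Im (v * l))%R
      with (Im (H (p t) - H (p x) - (p t - p x) * l)) by (rewrite Hp; unfold Im; simpl; ring).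
    apply Cmod_Im_le.
Qed.

Definition is_partials (H : Complex.C -> Complex.C) (z hx hy : Complex.C) : Prop :=
  is_derive (fun t => Re (H (t, Im z))) (Re z) (Re hx) /\ is_derive (fun t => Im (H (t, Im z))) (Re z) (Im hx) /\
  is_derive (fun t => Re (H (Re z, t))) (Im z) (Re hy) /\ is_derive (fun t => Im (H (Re z, t))) (Im z) (Im hy).

Lemma is_partials_of_Cderive H z l : is_Cderive H z l -> is_partials H z l (Ci * l).
Proof.
  intros HD. destruct z as [x y].
  assert (A := is_derive_Cderive_along H (fun t => (t, y)) 1 x l
    ltac:(intros; apply injective_projections; simpl; ring) Cmod_1 HD).
  assert (B := is_derive_Cderive_along H (fun t => (x, t)) Ci y l
    ltac:(intros; apply injective_projections; simpl; ring) Cmod_Ci HD).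
  rewrite Cmult_1_l in A. unfold is_partials; simpl. tauto.
Qed.

Lemma is_partials_ext H K z hx hy : (forall q, H q = K q) -> is_partials H z hx hy -> is_partials K z hx hy.
Proof.
  intros E (A1 & A2 & A3 & A4).
  split; [|split; [|split]]; eapply is_derive_ext; eauto; intros; simpl; rewrite E; auto.
Qed.

Lemma is_derive_Cmult_parts (f g : R -> Complex.C) t fd gd :
  is_derive (fun s => Re (f s)) t (Re fd) -> is_derive (fun s => Im (f s)) t (Im fd) ->
  is_derive (fun s => Re (g s)) t (Re gd) -> is_derive (fun s => Im (g s)) t (Im gd) ->
  is_derive (fun s => Re (f s * g s)) t (Re (fd * g t + f t * gd)) /\
  is_derive (fun s => Im (f s * g s)) t (Im (fd * g t + f t * gd)).
Proof.
  intros A1 A2 B1 B2.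
  assert (M : forall p q p' q', is_derive p t p' -> is_derive q t q' ->
    is_derive (fun s => p s * q s)%R t (p' * q t + p t * q')%R)
    by (intros p q p' q' Hp Hq; exact (is_derive_mult p q t p' q' Hp Hq Rmult_comm)).
  assert (Dm : forall p q p' q', is_derive p t p' -> is_derive q t q' ->
    is_derive (fun s => p s - q s)%R t (p' - q')%R)
    by (intros p q p' q' Hp Hq; exact (is_derive_minus p q t p' q' Hp Hq)).
  assert (Dp : forall p q p' q', is_derive p t p' -> is_derive q t q' ->
    is_derive (fun s => p s + q s)%R t (p' + q')%R)
    by (intros p q p' q' Hp Hq; exact (is_derive_plus p q t p' q' Hp Hq)).
  split.
  - eapply is_derive_eq; [|eapply is_derive_ext; [|exact (Dm _ _ _ _ (M _ _ _ _ A1 B1) (M _ _ _ _ A2 B2))]];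
      [unfold Re, Im; simpl; ring | intros; unfold Re, Im; simpl; ring].
  - eapply is_derive_eq; [|eapply is_derive_ext; [|exact (Dp _ _ _ _ (M _ _ _ _ A1 B2) (M _ _ _ _ A2 B1))]];
      [unfold Re, Im; simpl; ring | intros; unfold Re, Im; simpl; ring].
Qed.

Lemma is_partials_mult H K z hx hy kx ky : is_partials H z hx hy -> is_partials K z kx ky ->
  is_partials (fun q => H q * K q) z (hx * K z + H z * kx) (hy * K z + H z * ky).
Proof.
  destruct z as [x y]. intros (A1 & A2 & A3 & A4) (B1 & B2 & B3 & B4).
  destruct (is_derive_Cmult_parts (fun t => H (t, y)) (fun t => K (t, y)) x hx kx A1 A2 B1 B2).
  destruct (is_derive_Cmult_parts (fun t => H (x, t)) (fun t => K (x, t)) y hy ky A3 A4 B3 B4).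
  unfold is_partials. simpl in *. tauto.
Qed.

Lemma is_partials_RtoC (g : Complex.C -> R) z gx gy :
  is_derive (fun t => g (t, Im z)) (Re z) gx -> is_derive (fun t => g (Re z, t)) (Im z) gy ->
  is_partials (fun q => RtoC (g q)) z (RtoC gx) (RtoC gy).
Proof. intros H1 H2. split; [|split; [|split]]; simpl; auto; exact (is_derive_const _ _). Qed.

Lemma is_partials_RtoC_inv (g : Complex.C -> R) z gx gy : g z <> 0%R ->
  is_derive (fun t => g (t, Im z)) (Re z) gx -> is_derive (fun t => g (Re z, t)) (Im z) gy ->
  is_partials (fun q => RtoC (/ g q)) z (RtoC (- gx / g z ^ 2)) (RtoC (- gy / g z ^ 2)).
Proof.
  destruct z as [x y]. simpl. intros Hg H1 H2.
  apply is_partials_RtoC; simpl; apply is_derive_inv; auto.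
Qed.

Lemma is_partials_const (c : Complex.C) z : is_partials (fun _ => c) z 0 0.
Proof. split; [|split; [|split]]; simpl; exact (is_derive_const _ _). Qed.

Lemma dzbar_dz_of_is_partials H z hx hy : is_partials H z hx hy ->
  dzbar H z = (hx + Ci * hy) / 2 /\ dz H z = (hx - Ci * hy) / 2.
Proof.
  intros (A1 & A2 & A3 & A4).
  assert (Ex : dx H z = hx) by (apply injective_projections; simpl; apply is_derive_unique; auto).
  assert (Ey : dy H z = hy) by (apply injective_projections; simpl; apply is_derive_unique; auto).
  unfold dzbar, dz. rewrite Ex, Ey. auto.
Qed.

Lemma dz_of_is_Cderive H z l : is_Cderive H z l -> dz H z = l.
Proof.
  intros HD. rewrite (proj2 (dzbar_dz_of_is_partials _ _ _ _ (is_partials_of_Cderive _ _ _ HD))).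
  apply injective_projections; simpl; field.
Qed.

Lemma has_partials_of_is_partials H (Om : Complex.C -> Prop) :
  (forall z, Om z -> exists hx hy, is_partials H z hx hy) -> has_partials H Om.
Proof. intros HP z Hz. destruct (HP z Hz) as (hx & hy & A1 & A2 & A3 & A4). repeat split; eexists; eauto. Qed.

(** * Characteristic coefficients of weighted pairs *)

Section WeightedPair.

Variables (F G W : Complex.C -> Complex.C) (g : Complex.C -> R) (z k : Complex.C) (gx gy : R).
Hypotheses (F_def : forall q, F q = W q * RtoC (g q)) (G_def : forall q, G q = W q * (Ci * RtoC (/ g q))).
Hypotheses (W_deriv : is_Cderive W z k) (W_neq0 : W z <> 0) (g_neq0 : g z <> 0%R).
Hypotheses (g_dx : is_derive (fun t => g (t, Im z)) (Re z) gx) (g_dy : is_derive (fun t => g (Re z, t)) (Im z) gy).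

Lemma weighted_pair_partials :
  is_partials F z (k * RtoC (g z) + W z * RtoC gx) (Ci * k * RtoC (g z) + W z * RtoC gy) /\
  is_partials G z (k * (Ci * RtoC (/ g z)) + W z * (0 * RtoC (/ g z) + Ci * RtoC (- gx / g z ^ 2)))
                  (Ci * k * (Ci * RtoC (/ g z)) + W z * (0 * RtoC (/ g z) + Ci * RtoC (- gy / g z ^ 2))).
Proof.
  assert (PW := is_partials_of_Cderive _ _ _ W_deriv).
  split.
  - apply (is_partials_ext (fun q => W q * RtoC (g q))); [intros; symmetry; auto|].
    apply (is_partials_mult W (fun q => RtoC (g q))); [exact PW | apply is_partials_RtoC; auto].
  - apply (is_partials_ext (fun q => W q * (Ci * RtoC (/ g q)))); [intros; symmetry; auto|].
    apply (is_partials_mult W (fun q => Ci * RtoC (/ g q))); [exact PW|].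
    apply (is_partials_mult (fun _ => Ci) (fun q => RtoC (/ g q)));
      [apply is_partials_const | apply is_partials_RtoC_inv; auto].
Qed.

Lemma weighted_pair_wirtinger :
  dzbar F z = W z * ((RtoC gx + Ci * RtoC gy) / 2) /\
  dz F z = k * RtoC (g z) + W z * ((RtoC gx - Ci * RtoC gy) / 2) /\
  dzbar G z = - (Ci * W z * ((RtoC gx + Ci * RtoC gy) / (2 * RtoC (g z) ^ 2))) /\
  dz G z = Ci * (k / RtoC (g z) - W z * ((RtoC gx - Ci * RtoC gy) / (2 * RtoC (g z) ^ 2))).
Proof.
  destruct weighted_pair_partials as [PF PG].
  destruct (dzbar_dz_of_is_partials _ _ _ _ PF) as [-> ->].
  destruct (dzbar_dz_of_is_partials _ _ _ _ PG) as [-> ->].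
  destruct (W z) as [w1 w2], k as [k1 k2].
  repeat split; apply injective_projections; simpl; field; auto.
Qed.

Lemma weighted_pair_char :
  char_a F G z = 0 /\
  char_b F G z = W z / Cconj (W z) * ((RtoC gx + Ci * RtoC gy) / (2 * RtoC (g z))) /\
  char_B F G z = W z / Cconj (W z) * ((RtoC gx - Ci * RtoC gy) / (2 * RtoC (g z))) /\
  0 < Im (Cconj (F z) * G z).
Proof.
  destruct weighted_pair_wirtinger as (D1 & D2 & D3 & D4).
  unfold char_a, char_b, char_B. rewrite D1, D2, D3, D4, !F_def, !G_def.
  assert (Rinv : RtoC (/ g z) = / RtoC (g z)) by (apply injective_projections; simpl; field; auto).
  rewrite Rinv. set (w := W z) in *. set (c := Cconj w). set (r := RtoC (g z)).
  assert (Hr : r <> 0) by (apply RtoC_neq_0; auto).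
  assert (Hc : c <> 0) by (apply Cconj_neq_0; auto).
  assert (Hi : Ci <> 0) by (intros E; apply (f_equal snd) in E; simpl in E; lra).
  assert (Cr : Cconj r = r) by (apply injective_projections; simpl; ring).
  assert (CCi : Cconj Ci = - Ci) by (apply injective_projections; simpl; ring).
  rewrite !Cmult_conj, Cinv_conj, Cr, CCi by auto. fold c.
  (* the common denominator is [-2 i |W z|^2] *)
  assert (Den : w * (c * - Ci) - c * (w * Ci) <> 0).
  { replace (w * (c * - Ci) - c * (w * Ci)) with ((0, (-2)%R) * (w * c))
      by (apply injective_projections; simpl; ring).
    apply Cmult_neq_0; [|apply Cmult_neq_0; auto].
    intros E. apply (f_equal snd) in E. simpl in E. lra. }
  split; [|split; [|split]]; try (field; repeat split; auto).
  replace (c * r * (w * (Ci * / r))) with (Ci * (w * c)) by (field; auto).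
  unfold c. rewrite <- Cmod2_conj. simpl.
  assert (0 < Cmod w) by exact (proj1 (Cmod_gt_0 _) W_neq0). nra.
Qed.

End WeightedPair.

Lemma conformal_char_shift (l W X X' g g' : Complex.C) : l <> 0 -> W <> 0 -> g <> 0 -> g' <> 0 ->
  l * X' * g = - X * g' * Cconj l ->
  l * W / Cconj (l * W) * (X' / (2 * g')) = - (W / Cconj W * (X / (2 * g))).
Proof.
  intros Hl HW Hg Hg' K. rewrite Cmult_conj.
  assert (Cl := Cconj_neq_0 _ Hl). assert (CW := Cconj_neq_0 _ HW).
  transitivity (W / Cconj W * ((l * X' * g) / (Cconj l * 2 * g * g'))); [field; auto|].
  rewrite K. field. auto.
Qed.

Section Embedding.

Variables (Om : Complex.C -> Prop) (Phi : Complex.C -> Complex.C) (U V : R -> R).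
Hypotheses (Om_open : open Om) (Phi_deriv : forall z, Om z -> is_Cderive Phi z (dz Phi z))
  (dPhi_neq0 : forall z, Om z -> dz Phi z <> 0).
Hypotheses (U_derivable : forall t, ex_derive U t) (V_derivable : forall t, ex_derive V t)
  (U_neq0 : forall t, U t <> 0%R) (V_neq0 : forall t, V t <> 0%R).

(* [F_m = (Phi_z)^m weight_m] and [G_m = i (Phi_z)^m / weight_m]. *)
Definition weight (m : Z) (z : Complex.C) : R :=
  if Z.even m then (U (Re (Phi z)) * V (Im (Phi z)))%R else (V (Im (Phi z)) / U (Re (Phi z)))%R.

Definition weight_dx (m : Z) (z : Complex.C) : R :=
  let a := Re (dz Phi z) in let b := Im (dz Phi z) in
  let P := Derive U (Re (Phi z)) in let Q := Derive V (Im (Phi z)) in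
  let Uz := U (Re (Phi z)) in let Vz := V (Im (Phi z)) in
  if Z.even m then (a * P * Vz + Uz * (b * Q))%R else (b * Q / Uz - Vz * (a * P) / Uz ^ 2)%R.

Definition weight_dy (m : Z) (z : Complex.C) : R :=
  let a := Re (dz Phi z) in let b := Im (dz Phi z) in
  let P := Derive U (Re (Phi z)) in let Q := Derive V (Im (Phi z)) in
  let Uz := U (Re (Phi z)) in let Vz := V (Im (Phi z)) in
  if Z.even m then (- b * P * Vz + Uz * (a * Q))%R else (a * Q / Uz + Vz * (b * P) / Uz ^ 2)%R.

Lemma weight_neq_0 m z : weight m z <> 0%R.
Proof.
  unfold weight. destruct (Z.even m); [apply Rmult_integral_contrapositive; auto|].
  unfold Rdiv. apply Rmult_integral_contrapositive. split; [|apply Rinv_neq_0_compat]; auto.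
Qed.

Lemma is_derive_weight_along m (p q : R -> R) x p' q' :
  is_derive p x p' -> is_derive q x q' ->
  is_derive (fun t => if Z.even m then (U (p t) * V (q t))%R else (V (q t) / U (p t))%R) x
    (if Z.even m then (p' * Derive U (p x) * V (q x) + U (p x) * (q' * Derive V (q x)))%R
     else (q' * Derive V (q x) / U (p x) - V (q x) * (p' * Derive U (p x)) / U (p x) ^ 2)%R).
Proof.
  intros Hp Hq.
  assert (HU : is_derive (fun t => U (p t)) x (p' * Derive U (p x))%R)
    by exact (is_derive_comp U p x _ _ (Derive_correct _ _ (U_derivable (p x))) Hp).
  assert (HV : is_derive (fun t => V (q t)) x (q' * Derive V (q x))%R)
    by exact (is_derive_comp V q x _ _ (Derive_correct _ _ (V_derivable (q x))) Hq).
  destruct (Z.even m).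
  - exact (is_derive_mult _ _ x _ _ HU HV Rmult_comm).
  - eapply is_derive_eq; [|exact (is_derive_div _ _ x _ _ HV HU (U_neq0 (p x)))].
    cbv beta. field. auto.
Qed.

Lemma weight_partials m z : Om z ->
  is_derive (fun t => weight m (t, Im z)) (Re z) (weight_dx m z) /\
  is_derive (fun t => weight m (Re z, t)) (Im z) (weight_dy m z).
Proof.
  intros Hz. destruct (is_partials_of_Cderive _ _ _ (Phi_deriv z Hz)) as (P1 & P2 & P3 & P4).
  assert (ReCi : forall l : Complex.C, Re (Ci * l) = (- Im l)%R) by (intros; unfold Re, Im; simpl; ring).
  assert (ImCi : forall l : Complex.C, Im (Ci * l) = Re l) by (intros; unfold Re, Im; simpl; ring).
  rewrite ReCi in P3. rewrite ImCi in P4.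
  destruct z as [x y]. change (Re (x, y)) with x in *. change (Im (x, y)) with y in *.
  pose proof (U_neq0 (Re (Phi (x, y)))).
  split; (eapply is_derive_eq; [|apply is_derive_weight_along; eassumption]);
    unfold weight_dx, weight_dy; cbv zeta;
    (* the chain rule produces pairs typed over [AbsRing.sort R_AbsRing], which [field] would not identify *)
    try change (@pair R (AbsRing.sort R_AbsRing) x y) with (x, y);
    try change (@pair (AbsRing.sort R_AbsRing) R x y) with (x, y);
    destruct (Z.even m); field; auto.
Qed.

Lemma weight_succession m z :
  dz Phi z * (RtoC (weight_dx (m + 1) z) + Ci * RtoC (weight_dy (m + 1) z)) * RtoC (weight m z)
  = - (RtoC (weight_dx m z) - Ci * RtoC (weight_dy m z)) * RtoC (weight (m + 1) z) * Cconj (dz Phi z).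
Proof.
  assert (Hs : Z.even (m + 1) = negb (Z.even m)).
  { change (m + 1)%Z with (Z.succ m). rewrite Z.even_succ, <- Z.negb_even. reflexivity. }
  pose proof (U_neq0 (Re (Phi z))).
  unfold weight, weight_dx, weight_dy. cbv zeta. rewrite Hs.
  destruct (dz Phi z) as [a b]. destruct (Z.even m); simpl; apply injective_projections; simpl; field; auto.
Qed.

Let Fw (m : Z) (z : Complex.C) := Czpow (dz Phi z) m * RtoC (weight m z).
Let Gw (m : Z) (z : Complex.C) := Czpow (dz Phi z) m * (Ci * RtoC (/ weight m z)).

Lemma weighted_pair_spec m z : Om z ->
  (exists hx hy, is_partials (Fw m) z hx hy) /\ (exists hx hy, is_partials (Gw m) z hx hy) /\
  char_a (Fw m) (Gw m) z = 0 /\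
  char_b (Fw m) (Gw m) z = Czpow (dz Phi z) m / Cconj (Czpow (dz Phi z) m)
    * ((RtoC (weight_dx m z) + Ci * RtoC (weight_dy m z)) / (2 * RtoC (weight m z))) /\
  char_B (Fw m) (Gw m) z = Czpow (dz Phi z) m / Cconj (Czpow (dz Phi z) m)
    * ((RtoC (weight_dx m z) - Ci * RtoC (weight_dy m z)) / (2 * RtoC (weight m z))) /\
  0 < Im (Cconj (Fw m z) * Gw m z).
Proof.
  intros Hz.
  destruct (ex_Cderive_deriv Phi (dz Phi) Om Om_open Phi_deriv z Hz) as [l Hl].
  destruct (ex_Cderive_Czpow (dz Phi) z l m Hl (dPhi_neq0 z Hz)) as [k Hk].
  assert (HW : Czpow (dz Phi z) m <> 0) by (apply Czpow_neq_0; auto).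
  destruct (weight_partials m z Hz) as [Dx Dy].
  destruct (weighted_pair_partials (Fw m) (Gw m) (fun q => Czpow (dz Phi q) m) (weight m) z k
    (weight_dx m z) (weight_dy m z) (fun q => eq_refl) (fun q => eq_refl) Hk (weight_neq_0 m z) Dx Dy)
    as [PF PG].
  destruct (weighted_pair_char (Fw m) (Gw m) (fun q => Czpow (dz Phi q) m) (weight m) z k
    (weight_dx m z) (weight_dy m z) (fun q => eq_refl) (fun q => eq_refl) Hk HW (weight_neq_0 m z) Dx Dy)
    as (Ca & Cb & CB & Pos).
  repeat split; eauto.
Qed.

Lemma weighted_generating_sequence : generating_sequence Fw Gw Om.
Proof.
  assert (GP : forall m, generating_pair (Fw m) (Gw m) Om).
  { intros m. split; [|split]; [apply has_partials_of_is_partials .. |];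
      intros z Hz; apply (weighted_pair_spec m z Hz). }
  split; [exact GP|]. intros m. split; [apply GP|]. intros z Hz.
  destruct (weighted_pair_spec m z Hz) as (_ & _ & A & _ & B & _).
  destruct (weighted_pair_spec (m + 1) z Hz) as (_ & _ & A' & B' & _ & _).
  split; [congruence|]. rewrite B', B, Czpow_succ by auto.
  apply conformal_char_shift; try apply RtoC_neq_0; try apply weight_neq_0; auto.
  - apply Czpow_neq_0; auto.
  - apply weight_succession.
Qed.

End Embedding.

Lemma analytic_on_is_Cderive_dz Phi Om : analytic_on Phi Om -> forall z, Om z -> is_Cderive Phi z (dz Phi z).
Proof.
  intros HA z Hz. destruct (HA z Hz) as [l Hl]. apply is_Cderive_of_C_NormedModule in Hl.
  rewrite (dz_of_is_Cderive _ _ _ Hl). exact Hl.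
Qed.

Theorem theorem20 (Om : Complex.C -> Prop) (Phi : Complex.C -> Complex.C)
  (U V : R -> R) :
  is_domain Om ->
  analytic_on Phi Om ->
  (exists M : R, forall z, Om z -> Cmod (dz Phi z) <= M) ->
  (forall z, Om z -> dz Phi z <> 0) ->
  (forall t, ex_derive U t) -> (forall t, ex_derive V t) ->
  (forall t, U t <> 0%R) -> (forall t, V t <> 0%R) ->
  let u := fun z => Re (Phi z) in
  let v := fun z => Im (Phi z) in
  let F := fun z => RtoC (U (u z) * V (v z)) in
  let G := fun z => Ci / RtoC (U (u z) * V (v z)) in
  let Fs := fun (m : Z) z =>
    if Z.even m then Czpow (dz Phi z) m * F z
    else Czpow (dz Phi z) m / RtoC (U (u z) ^ 2) * F z in
  let Gs := fun (m : Z) z =>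
    if Z.even m then Czpow (dz Phi z) m * G z
    else Czpow (dz Phi z) m * RtoC (U (u z) ^ 2) * G z in
  generating_sequence Fs Gs Om /\ Fs 0%Z = F /\ Gs 0%Z = G.
Proof.
  intros [HO _] HA _ HNZ HdU HdV HU0 HV0 u v F G Fs Gs.
  assert (EF : Fs = fun m z => Czpow (dz Phi z) m * RtoC (weight Phi U V m z)).
  { apply functional_extensionality; intros m; apply functional_extensionality; intros z.
    unfold Fs, F, weight, u, v. pose proof (HU0 (Re (Phi z))). destruct (Z.even m); [reflexivity|].
    apply injective_projections; simpl; field; auto. }
  assert (EG : Gs = fun m z => Czpow (dz Phi z) m * (Ci * RtoC (/ weight Phi U V m z))).
  { apply functional_extensionality; intros m; apply functional_extensionality; intros z.
    unfold Gs, G, weight, u, v. pose proof (HU0 (Re (Phi z))). pose proof (HV0 (Im (Phi z))).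
    destruct (Z.even m); apply injective_projections; simpl; field; auto. }
  split; [rewrite EF, EG; apply weighted_generating_sequence; auto; apply analytic_on_is_Cderive_dz; auto|].
  split; apply functional_extensionality; intros z; [unfold Fs | unfold Gs]; simpl; ring.
Qed.
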